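(* Let $M$ be a quasianalytic derivation closed weight sequence such that $m=(M_k/k!)_k$ is log-convex and $m_k^{1/k}\to\infty$. Then the ring ${}_1\mathcal{E}^{(M)}$ has property $(\mathscr{D})$.
   Context: A weight sequence is a sequence $M=(M_k)_{k\ge0}$ of positive reals with $M_k=\mu_1\cdots\mu_k$, $M_0=1$, where $(\mu_k)$ is positive and increasing with $\mu_0=1$, and $M_k^{1/k}\to\infty$. $M$ is quasianalytic if $\sum_{k\ge1}1/\mu_k=\infty$; $M$ is derivation closed if $\exists C>0\ \forall k: M_{k+1}\le C^{k+1}M_k$. For open $U\subseteq\mathbb{R}$ and $\sigma>0$, $\mathcal{B}^M_\sigma(U)$ is the set of $f\in C^\infty(U)$ with $\sup_{x\in U,k\in\mathbb{N}}|f^{(k)}(x)|/(\sigma^{k}M_{k})<\infty$. $\mathcal{E}^{(M)}(U)$ is the set of $f\in C^\infty(U)$ with $f|_V\in\mathcal{B}^M_\sigma(V)$ for every relatively compact open $V\subseteq U$ and every $\sigma>0$. ${}_1\mathcal{E}^{(M)}$ is the ring of germs at $0\in\mathbb{R}$ of complex valued $\mathcal{E}^{(M)}$-functions. A subring $\mathcal{S}$ of the ring of germs at $0\in\mathbb{R}$ of complex valued $C^\infty$ functions has property $(\mathscr{D})$ if for every complex valued function germ $f$ at $0$: if $f^j,f^{j+1}\in\mathcal{S}$ for some integer $j\ge1$, then $f\in\mathcal{S}$. *)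

From Stdlib Require Import Reals Factorial.
From Coquelicot Require Import Coquelicot.
Open Scope R_scope.

(** Weight sequence given by its quotient sequence mu: M_k = mu_1 ... mu_k. *)
Fixpoint Mseq (mu : nat -> R) (k : nat) : R :=
  match k with
  | O => 1
  | S k' => Mseq mu k' * mu (S k')
  end.

Definition weight_sequence (mu : nat -> R) : Prop :=
  mu O = 1 /\
  (forall k, 0 < mu k) /\
  (forall k, mu k <= mu (S k)) /\
  is_lim_seq (fun k => Rpower (Mseq mu k) (/ INR k)) p_infty.

Definition quasianalytic (mu : nat -> R) : Prop :=
  ~ ex_series (fun k => / mu (S k)).

Definition derivation_closed (mu : nat -> R) : Prop :=
  exists C, 0 < C /\ forall k, Mseq mu (S k) <= C ^ (S k) * Mseq mu k.

Definition mseq (mu : nat -> R) (k : nat) : R := Mseq mu k / INR (fact k).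

Definition log_convex (m : nat -> R) : Prop :=
  forall k, m (S k) ^ 2 <= m k * m (S (S k)).

Definition Cderive_n (f : R -> C) (k : nat) (x : R) : C :=
  (Derive_n (fun t => Re (f t)) k x, Derive_n (fun t => Im (f t)) k x).

Definition smooth_on (U : R -> Prop) (f : R -> C) : Prop :=
  forall k x, U x ->
    ex_derive_n (fun t => Re (f t)) k x /\ ex_derive_n (fun t => Im (f t)) k x.

Definition adherent (V : R -> Prop) (x : R) : Prop :=
  forall eps, 0 < eps -> exists y, V y /\ Rabs (x - y) < eps.

(** V is relatively compact in U: closure of V is compact (= bounded in R)
    and contained in U. *)
Definition rel_compact_in (V U : R -> Prop) : Prop :=
  (exists B, forall x, V x -> Rabs x <= B) /\
  (forall x, adherent V x -> U x).

Definition in_B_M (mu : nat -> R) (sigma : R) (V : R -> Prop) (f : R -> C) : Prop :=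
  exists C, forall x k, V x ->
    Cmod (Cderive_n f k x) / (sigma ^ k * Mseq mu k) <= C.

Definition E_Beurling (mu : nat -> R) (U : R -> Prop) (f : R -> C) : Prop :=
  smooth_on U f /\
  forall V, open V -> rel_compact_in V U ->
    forall sigma, 0 < sigma -> in_B_M mu sigma V f.

(** The germ of f at 0 belongs to 1E^{(M)}: some representative on an open
    neighbourhood of 0 (w.l.o.g. an interval (-eps, eps)) is E^{(M)}. *)
Definition germ_in_E (mu : nat -> R) (f : R -> C) : Prop :=
  exists eps, 0 < eps /\ E_Beurling mu (fun x => - eps < x < eps) f.

Definition property_D (Sg : (R -> C) -> Prop) : Prop :=
  forall (f : R -> C) (j : nat), (1 <= j)%nat ->
    Sg (fun x => Cpow (f x) j) -> Sg (fun x => Cpow (f x) (S j)) -> Sg f.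

(* A germ of E^(M) is represented by two real towers (F_k), F_(k+1) = F_k' on
   (-d, d), with |F_k| <= c s^k M_k on compact subintervals for every s > 0.
   Such towers are closed under sums and products (Leibniz rule), under division
   by x^n when F_k(0) = 0 for k < n (Hadamard's lemma plus derivation closedness),
   and under inversion when bounded away from 0: the Leibniz recursion for the
   derivatives of 1/U gains the factor m_1 m_(k-1) / m_k, which tends to 0 by
   log-convexity of m and m_k^(1/k) -> oo.  By quasianalyticity a flat tower
   vanishes (Denjoy-Carleman).  Hence if g = f^j is not zero near 0, then
   g = x^a u with u(0) <> 0, so |f^(j+1)| = |g|^((j+1)/j) <= K |x|^a and
   f^(j+1) = x^a v.  Then f = v/u away from 0, and also at 0 since f(0) is
   determined by f(0)^j and f(0)^(j+1). *)

From Stdlib Require Import Reals Lra Lia Factorial Classical Wf_nat.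
From Coquelicot Require Import Coquelicot.
Open Scope R_scope.

(* Stdlib's real binomial coefficient; the name C is taken by Coquelicot's complex numbers. *)
Local Notation binom := Binomial.C.

(** * Weight sequences and derivative towers *)

Section WeightSequence.
Variable mu : nat -> R.
Hypothesis mu_pos : forall k, 0 < mu k.
Hypothesis mu_incr : forall k, mu k <= mu (S k).

Lemma mu_monotone a b : (a <= b)%nat -> mu a <= mu b.
Proof. induction 1 as [|b _ IH]; [lra|]. specialize (mu_incr b). lra. Qed.

Lemma Mseq_pos k : 0 < Mseq mu k.
Proof. induction k; simpl; [lra|]. apply Rmult_lt_0_compat; auto. Qed.

Lemma Mseq_mul_le p q : Mseq mu p * Mseq mu q <= Mseq mu (p + q).
Proof.
  induction q as [|q IH]; simpl.
  - rewrite Nat.add_0_r. lra.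
  - rewrite Nat.add_succ_r. simpl.
    assert (Hmu := mu_monotone (S q) (S (p + q)) ltac:(lia)).
    assert (Hp := Mseq_pos p). assert (Hq := Mseq_pos q).
    assert (Hpq := Mseq_pos (p + q)). assert (Hm := mu_pos (S q)).
    rewrite <- Rmult_assoc. apply Rmult_le_compat; nra.
Qed.

Lemma mseq_pos k : 0 < mseq mu k.
Proof. apply Rdiv_lt_0_compat; [apply Mseq_pos|apply INR_fact_lt_0]. Qed.

Lemma Mseq_mseq k : Mseq mu k = mseq mu k * INR (fact k).
Proof. unfold mseq. field. apply INR_fact_neq_0. Qed.

End WeightSequence.

Lemma locally_interval (d x : R) : -d < x < d -> locally x (fun y => -d < y < d).
Proof.
  intros Hx.
  apply (open_and (fun y => -d < y) (fun y => y < d)); [apply open_gt|apply open_lt|exact Hx].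
Qed.

Lemma is_derive_continuity_pt f x l : is_derive f x l -> continuity_pt f x.
Proof.
  intros H. apply continuity_pt_filterlim.
  apply (ex_derive_continuous (K := R_AbsRing) (V := R_NormedModule) f x). exists l. exact H.
Qed.

Definition is_derive_tower_upto (n : nat) (F : nat -> R -> R) (d : R) : Prop :=
  forall k x, (k < n)%nat -> -d < x < d -> is_derive (F k) x (F (S k) x).

Definition is_derive_tower (F : nat -> R -> R) (d : R) : Prop :=
  forall k x, -d < x < d -> is_derive (F k) x (F (S k) x).

Lemma tower_upto_Derive_n n F d f :
  is_derive_tower_upto n F d -> (forall x, -d < x < d -> f x = F O x) ->
  forall k x, (k <= n)%nat -> -d < x < d ->
    ex_derive_n f k x /\ Derive_n f k x = F k x.
Proof.
  intros HF Hf.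
  assert (E : forall k x, (k <= n)%nat -> -d < x < d -> Derive_n f k x = F k x).
  { induction k as [|k IH]; intros x Hk Hx; simpl; [auto|].
    rewrite (Derive_ext_loc _ (F k)).
    - apply is_derive_unique, HF; [lia|exact Hx].
    - generalize (locally_interval d x Hx). apply filter_imp.
      intros y Hy. apply IH; [lia|exact Hy]. }
  intros k x Hk Hx. split; [|apply E; assumption].
  destruct k as [|k]; simpl; [exact I|].
  apply (ex_derive_ext_loc (F k)).
  - generalize (locally_interval d x Hx). apply filter_imp.
    intros y Hy. symmetry. apply E; [lia|exact Hy].
  - exists (F (S k) x). apply HF; [lia|exact Hx].
Qed.

Lemma tower_Derive_n F d f :
  is_derive_tower F d -> (forall x, -d < x < d -> f x = F O x) ->
  forall k x, -d < x < d -> ex_derive_n f k x /\ Derive_n f k x = F k x.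
Proof.
  intros HF Hf k x Hx. apply (tower_upto_Derive_n k F d f); auto.
  intros i y _ Hy. apply HF, Hy.
Qed.

Lemma Derive_n_tower f d :
  (forall k x, -d < x < d -> ex_derive_n f k x) -> is_derive_tower (Derive_n f) d.
Proof. intros H k x Hx. apply Derive_correct, (H (S k) x Hx). Qed.

Lemma tower_restrict F d d' : d' <= d -> is_derive_tower F d -> is_derive_tower F d'.
Proof. intros Hd H k x Hx. apply H. lra. Qed.

(** * Leibniz rule and Beurling towers *)

Definition mul_tower (A B : nat -> R -> R) (k : nat) (x : R) : R :=
  sum_f_R0 (fun i => binom k i * A i x * B (k - i)%nat x) k.

Lemma binom_nonneg k i : 0 <= binom k i.
Proof.
  unfold Binomial.C. apply Rlt_le, Rdiv_lt_0_compat; [|apply Rmult_lt_0_compat];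
    apply INR_fact_lt_0.
Qed.

Lemma sum_pascal (a b : nat -> R) k :
  sum_f_R0 (fun i => binom k i * (a (S i) * b (k - i)%nat + a i * b (S (k - i)))) k =
  sum_f_R0 (fun i => binom (S k) i * a i * b (S k - i)%nat) (S k).
Proof.
  destruct k as [|k].
  { cbn [sum_f_R0 Nat.sub]. rewrite !C_n_0, C_n_n. ring. }
  rewrite (sum_eq _ (fun i => binom (S k) i * a (S i) * b (S k - i)%nat
                            + binom (S k) i * a i * b (S (S k - i))))
    by (intros; ring).
  rewrite sum_plus, (tech5 (fun i => binom (S k) i * a (S i) * b (S k - i)%nat)),
    (decomp_sum (fun i => binom (S k) i * a i * b (S (S k - i)))),
    (decomp_sum (fun i => binom (S (S k)) i * a i * b (S (S k) - i)%nat)) by lia.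
  cbv beta. simpl pred.
  rewrite (tech5 (fun i => binom (S (S k)) (S i) * a (S i) * b (S (S k) - S i)%nat)).
  rewrite (sum_eq (fun i => binom (S (S k)) (S i) * a (S i) * b (S (S k) - S i)%nat)
             (fun i => binom (S k) i * a (S i) * b (S k - i)%nat
                     + binom (S k) (S i) * a (S i) * b (S (S k - S i))))
    by (intros i Hi; rewrite <- pascal by lia;
        replace (S (S k - S i)) with (S k - i)%nat by lia;
        change (S (S k) - S i)%nat with (S k - i)%nat; ring).
  rewrite sum_plus, !C_n_0, !C_n_n, !Nat.sub_0_r, !Nat.sub_diag. ring.
Qed.

Lemma is_derive_mul_tower A B k x :
  (forall i, (i <= k)%nat -> is_derive (A i) x (A (S i) x)) ->
  (forall i, (i <= k)%nat -> is_derive (B i) x (B (S i) x)) ->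
  is_derive (mul_tower A B k) x (mul_tower A B (S k) x).
Proof.
  intros HA HB. unfold mul_tower.
  rewrite <- (sum_pascal (fun i => A i x) (fun i => B i x)), <- sum_n_Reals.
  apply (is_derive_ext (fun y => sum_n (fun i => binom k i * A i y * B (k - i)%nat y) k)).
  { intros y. apply sum_n_Reals. }
  apply (is_derive_sum_n (fun i y => binom k i * A i y * B (k - i)%nat y)). intros i Hi.
  apply (is_derive_ext (fun y => binom k i * (A i y * B (k - i)%nat y)));
    [intros t; symmetry; apply Rmult_assoc|].
  apply (is_derive_scal (fun y => A i y * B (k - i)%nat y)).
  apply (is_derive_mult (A i) (B (k - i)%nat)); [apply HA; lia|apply HB; lia|].
  intros; apply Rmult_comm.
Qed.

Lemma mul_tower_is_tower A B d :
  is_derive_tower A d -> is_derive_tower B d -> is_derive_tower (mul_tower A B) d.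
Proof. intros HA HB k x Hx. apply is_derive_mul_tower; intros; auto. Qed.

Lemma mul_tower_upto_is_tower_upto n A B d :
  is_derive_tower_upto n A d -> is_derive_tower_upto n B d ->
  is_derive_tower_upto n (mul_tower A B) d.
Proof.
  intros HA HB k x Hk Hx. apply is_derive_mul_tower; intros i Hi; [apply HA|apply HB]; auto; lia.
Qed.

Definition beurling_tower (mu : nat -> R) (F : nat -> R -> R) (d : R) : Prop :=
  is_derive_tower F d /\
  forall r s, r < d -> 0 < s ->
    exists c, forall k x, Rabs x <= r -> Rabs (F k x) <= c * s ^ k * Mseq mu k.

Definition plus_tower (A B : nat -> R -> R) (k : nat) (x : R) : R := A k x + B k x.
Definition opp_tower (A : nat -> R -> R) (k : nat) (x : R) : R := - A k x.
Definition const_tower (c : R) (k : nat) (_ : R) : R := match k with O => c | S _ => 0 end.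

Section BeurlingTower.
Variable mu : nat -> R.
Hypothesis mu_pos : forall k, 0 < mu k.
Hypothesis mu_incr : forall k, mu k <= mu (S k).

Lemma mul_tower_bound A B ca cb s x k :
  0 <= s ->
  (forall j, Rabs (A j x) <= ca * s ^ j * Mseq mu j) ->
  (forall j, Rabs (B j x) <= cb * s ^ j * Mseq mu j) ->
  Rabs (mul_tower A B k x) <= ca * cb * (2 * s) ^ k * Mseq mu k.
Proof.
  intros Hs HA HB.
  assert (Hca : 0 <= ca).
  { specialize (HA O). simpl in HA. generalize (Rabs_pos (A O x)). lra. }
  assert (Hcb : 0 <= cb).
  { specialize (HB O). simpl in HB. generalize (Rabs_pos (B O x)). lra. }
  assert (Hbinom : sum_f_R0 (binom k) k = 2 ^ k).
  { replace 2 with (1 + 1) by ring. rewrite binomial.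
    apply sum_eq. intros. rewrite !pow1. ring. }
  unfold mul_tower. eapply Rle_trans; [apply Rsum_abs|].
  apply Rle_trans with (sum_f_R0 (fun i => binom k i * (ca * cb * s ^ k * Mseq mu k)) k).
  - apply sum_Rle. intros i Hi.
    assert (Hc := binom_nonneg k i).
    assert (Hsk : s ^ i * s ^ (k - i) = s ^ k) by (rewrite <- pow_add; f_equal; lia).
    assert (HM := Mseq_mul_le mu mu_pos mu_incr i (k - i)).
    replace (i + (k - i))%nat with k in HM by lia.
    specialize (HA i). specialize (HB (k - i)%nat).
    rewrite !Rabs_mult, (Rabs_right (binom k i)) by lra.
    rewrite Rmult_assoc. apply Rmult_le_compat_l; [exact Hc|].
    apply Rle_trans with ((ca * s ^ i * Mseq mu i) * (cb * s ^ (k - i) * Mseq mu (k - i))).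
    + apply Rmult_le_compat; auto using Rabs_pos.
    + rewrite <- Hsk.
      assert (0 <= ca * cb * (s ^ i * s ^ (k - i))) by
        (repeat apply Rmult_le_pos; auto; apply pow_le; exact Hs).
      replace (ca * s ^ i * Mseq mu i * (cb * s ^ (k - i) * Mseq mu (k - i)))
        with (ca * cb * (s ^ i * s ^ (k - i)) * (Mseq mu i * Mseq mu (k - i))) by ring.
      apply Rmult_le_compat_l; assumption.
  - rewrite <- scal_sum, Hbinom, Rpow_mult_distr. right. ring.
Qed.

Lemma beurling_tower_restrict F d d' :
  d' <= d -> beurling_tower mu F d -> beurling_tower mu F d'.
Proof.
  intros Hd [HF Hb]. split; [apply (tower_restrict F d); auto|].
  intros r s Hr Hs. apply Hb; [lra|exact Hs].
Qed.

Lemma beurling_tower_bound F d r s :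
  beurling_tower mu F d -> r < d -> 0 < s ->
  exists c, 0 <= c /\ forall k x, Rabs x <= r -> Rabs (F k x) <= c * s ^ k * Mseq mu k.
Proof.
  intros [_ Hb] Hr Hs. destruct (Hb r s Hr Hs) as [c Hc].
  exists (Rabs c). split; [apply Rabs_pos|]. intros k x Hx.
  eapply Rle_trans; [apply Hc, Hx|].
  apply Rmult_le_compat_r; [left; apply Mseq_pos, mu_pos|].
  apply Rmult_le_compat_r; [apply pow_le; lra|apply Rle_abs].
Qed.

Lemma beurling_mul_tower A B d :
  beurling_tower mu A d -> beurling_tower mu B d -> beurling_tower mu (mul_tower A B) d.
Proof.
  intros HA HB. split; [apply mul_tower_is_tower; [apply HA|apply HB]|].
  intros r s Hr Hs.
  destruct (beurling_tower_bound A d r (s / 2) HA Hr ltac:(lra)) as [ca [_ Ha]].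
  destruct (beurling_tower_bound B d r (s / 2) HB Hr ltac:(lra)) as [cb [_ Hb]].
  exists (ca * cb). intros k x Hx.
  replace s with (2 * (s / 2)) at 1 by field.
  apply mul_tower_bound; auto; lra.
Qed.

Lemma beurling_plus_tower A B d :
  beurling_tower mu A d -> beurling_tower mu B d -> beurling_tower mu (plus_tower A B) d.
Proof.
  intros HA HB. split.
  - intros k x Hx. apply (is_derive_plus (A k) (B k)); [apply HA|apply HB]; exact Hx.
  - intros r s Hr Hs.
    destruct (beurling_tower_bound A d r s HA Hr Hs) as [ca [_ Ha]].
    destruct (beurling_tower_bound B d r s HB Hr Hs) as [cb [_ Hb]].
    exists (ca + cb). intros k x Hx. unfold plus_tower.
    eapply Rle_trans; [apply Rabs_triang|].
    specialize (Ha k x Hx). specialize (Hb k x Hx). lra.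
Qed.

Lemma beurling_opp_tower A d : beurling_tower mu A d -> beurling_tower mu (opp_tower A) d.
Proof.
  intros [HA Hb]. split.
  - intros k x Hx. apply (is_derive_opp (A k)), HA, Hx.
  - intros r s Hr Hs. destruct (Hb r s Hr Hs) as [c Hc].
    exists c. intros k x Hx. unfold opp_tower. rewrite Rabs_Ropp. auto.
Qed.

Lemma beurling_const_tower c d : beurling_tower mu (const_tower c) d.
Proof.
  split.
  - intros [|k] x _; [exact (is_derive_const c x)|exact (is_derive_const 0 x)].
  - intros r s Hr Hs. exists (Rabs c). intros [|k] x _; simpl.
    + lra.
    + rewrite Rabs_R0.
      assert (0 < s * s ^ k * (Mseq mu k * mu (S k)))
        by (repeat apply Rmult_lt_0_compat; auto using pow_lt, Mseq_pos).
      generalize (Rabs_pos c). nra.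
Qed.

End BeurlingTower.

(** * Flat towers vanish *)

Lemma Rabs_increment_le (g G dg dG : R -> R) a b :
  a <= b ->
  (forall t, a <= t <= b -> is_derive g t (dg t)) ->
  (forall t, a <= t <= b -> is_derive G t (dG t)) ->
  (forall t, a <= t <= b -> Rabs (dg t) <= dG t) ->
  Rabs (g b - g a) <= G b - G a.
Proof.
  intros Hab Hg HG Hd.
  assert (K : forall sg, sg = 1 \/ sg = -1 -> sg * (g b - g a) <= G b - G a).
  { intros sg Hsg.
    assert (D : forall t, a <= t <= b ->
              is_derive (fun t => G t - sg * g t) t (dG t - sg * dg t)).
    { intros t Ht. apply (is_derive_minus G (fun t => sg * g t)); [apply HG, Ht|].
      apply (is_derive_scal g t sg), Hg, Ht. }
    destruct (Req_dec a b) as [<-|Hne]; [lra|].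
    destruct (MVT_gen (fun t => G t - sg * g t) a b (fun t => dG t - sg * dg t))
      as [c [Hc E]].
    - intros t Ht. rewrite Rmin_left, Rmax_right in Ht by lra. apply D. lra.
    - intros t Ht. rewrite Rmin_left, Rmax_right in Ht by lra.
      apply (is_derive_continuity_pt _ _ _ (D t Ht)).
    - rewrite Rmin_left, Rmax_right in Hc by lra.
      assert (H1 := Hd c ltac:(lra)). apply Rabs_le_between in H1.
      assert (0 <= dG c - sg * dg c) by (destruct Hsg as [-> | ->]; lra).
      assert (0 <= (dG c - sg * dg c) * (b - a)) by (apply Rmult_le_pos; lra).
      lra. }
  destruct (Rle_dec 0 (g b - g a)).
  - rewrite Rabs_right by lra. generalize (K 1 (or_introl eq_refl)). lra.
  - rewrite Rabs_left by lra. generalize (K (-1) (or_intror eq_refl)). lra.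
Qed.

Lemma exp_le_compat x y : x <= y -> exp x <= exp y.
Proof. intros [H|H]; [left; apply exp_increasing, H|rewrite H; lra]. Qed.

Lemma ln_1p_le z : 0 <= z -> ln (1 + z) <= z.
Proof.
  intros Hz. rewrite <- (ln_exp z) at 2.
  apply ln_le; [lra|]. apply exp_ineq1_le.
Qed.

Lemma ln_1p_nonneg z : 0 <= z -> 0 <= ln (1 + z).
Proof. intros Hz. rewrite <- ln_1. apply ln_le; lra. Qed.

Lemma softplus_le_exp a b y :
  0 < a <= b ->
  a / (exp 1 * b) * ln (1 + exp (2 * exp 1 * b * y)) <= exp (2 * exp 1 * a * y - 1).
Proof.
  intros Hab. set (e := exp 1). assert (He : 0 < e) by apply exp_pos.
  set (z := exp (2 * e * b * y)). assert (Hz : 0 < z) by apply exp_pos.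
  assert (Hr : 0 <= a / (e * b) <= / e).
  { split; [apply Rlt_le, Rdiv_lt_0_compat; nra|].
    apply (Rmult_le_reg_r (e * b)); [nra|]. field_simplify; nra. }
  assert (Hln := ln_1p_nonneg z (Rlt_le _ _ Hz)).
  unfold Rminus. rewrite exp_plus, exp_Ropp. fold e.
  destruct (Rle_dec y 0) as [Hy|Hy].
  - assert (Hzle : z <= exp (2 * e * a * y)).
    { apply exp_le_compat.
      assert (0 <= (b - a) * - y) by (apply Rmult_le_pos; lra). nra. }
    apply Rle_trans with (/ e * z).
    + assert (ln (1 + z) <= z) by (apply ln_1p_le; lra). nra.
    + assert (0 < / e) by (apply Rinv_0_lt_compat; lra). nra.
  - apply Rnot_le_lt in Hy.
    assert (Hln2 : ln (1 + z) <= ln 2 + 2 * e * b * y).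
    { replace (2 * e * b * y) with (ln z) by (unfold z; rewrite ln_exp; reflexivity).
      rewrite <- ln_mult by lra. apply ln_le; [lra|].
      assert (1 <= z).
      { unfold z. rewrite <- exp_0. apply exp_le_compat.
        assert (0 < 2 * e * b) by nra. nra. }
      lra. }
    assert (Hln2' : ln 2 <= 1).
    { rewrite <- (ln_exp 1). apply ln_le; [lra|]. generalize (exp_ineq1 1). lra. }
    assert (Hexp := exp_ineq1_le (2 * e * a * y)).
    assert (0 <= ln 2) by (rewrite <- ln_1; apply ln_le; lra).
    assert (E : a / (e * b) * (2 * e * b * y) = 2 * a * y) by (field; nra).
    apply Rle_trans with (a / (e * b) * ln 2 + 2 * a * y); [nra|].
    apply Rle_trans with (/ e * (1 + 2 * e * a * y)); [|nra].
    replace (/ e * (1 + 2 * e * a * y)) with (/ e + 2 * a * y) by (field; lra).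
    assert (/ e * ln 2 <= / e) by (assert (0 < / e) by (apply Rinv_0_lt_compat; lra); nra).
    nra.
Qed.

Lemma is_derive_scaled_softplus l X t :
  0 < l ->
  is_derive (fun t => 2 / l * ln (1 + exp (l * (t - X)))) t
    (2 * exp (l * (t - X)) / (1 + exp (l * (t - X)))).
Proof.
  intros Hl. assert (Hz := exp_pos (l * (t - X))). unfold Rminus in *.
  auto_derive; [lra|]. field. lra.
Qed.

Lemma Rmin_le_twice_logistic z : 0 < z -> Rmin 1 z <= 2 * z / (1 + z).
Proof.
  intros Hz. apply (Rmult_le_reg_r (1 + z)); [lra|].
  unfold Rdiv. rewrite Rmult_assoc, Rinv_l, Rmult_1_r by lra.
  unfold Rmin. destruct (Rle_dec 1 z) as [H|H]; [lra|apply Rnot_le_lt in H; nra].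
Qed.

Lemma abs_le_softplus_of_derive (g dg : R -> R) c l X x :
  0 < l -> 0 <= c -> g 0 = 0 ->
  (forall t, 0 <= t <= x -> is_derive g t (dg t)) ->
  (forall t, 0 <= t <= x -> Rabs (dg t) <= c) ->
  (forall t, 0 <= t <= x -> Rabs (dg t) <= c * exp (l * (t - X))) ->
  forall t, 0 <= t <= x -> Rabs (g t) <= c * (2 / l * ln (1 + exp (l * (t - X)))).
Proof.
  intros Hl Hc Hg0 Hg Hd1 Hd2 t Ht.
  set (Q := fun s => 2 / l * ln (1 + exp (l * (s - X)))).
  assert (HQ0 : 0 <= Q 0).
  { apply Rmult_le_pos; [apply Rlt_le, Rdiv_lt_0_compat; lra|].
    apply ln_1p_nonneg, Rlt_le, exp_pos. }
  assert (Hinc : Rabs (g t - g 0) <= c * Q t - c * Q 0).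
  { apply (Rabs_increment_le g (fun s => c * Q s) dg
             (fun s => c * (2 * exp (l * (s - X)) / (1 + exp (l * (s - X)))))); [lra| | |].
    - intros s Hs. apply Hg. lra.
    - intros s Hs. apply (is_derive_scal Q s c), is_derive_scaled_softplus, Hl.
    - intros s Hs. assert (Hz := exp_pos (l * (s - X))).
      apply Rle_trans with (c * Rmin 1 (exp (l * (s - X)))).
      + rewrite Rmult_min_distr_l by exact Hc. apply Rmin_glb.
        * rewrite Rmult_1_r. apply Hd1. lra.
        * apply Hd2. lra.
      + apply Rmult_le_compat_l; [exact Hc|apply Rmin_le_twice_logistic, Hz]. }
  rewrite Hg0, Rminus_0_r in Hinc.
  assert (0 <= c * Q 0) by (apply Rmult_le_pos; assumption). unfold Q in *. lra.
Qed.

Section DenjoyCarleman.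
Variable mu : nat -> R.
Hypothesis mu_pos : forall k, 0 < mu k.
Hypothesis mu_incr : forall k, mu k <= mu (S k).

(* Each derivative pushes the decay of a flat tower further (flat_tower_decay);
   the delays decay_delay 0 i are partial sums of sum 1 / (2 e mu_k), so they
   diverge exactly when mu is quasianalytic. *)
Definition decay_rate (k : nat) : R := 2 * exp 1 * mu (S k).

Fixpoint decay_delay (k i : nat) : R :=
  match i with O => 0 | S i => / decay_rate k + decay_delay (S k) i end.

Lemma decay_rate_pos k : 0 < decay_rate k.
Proof.
  unfold decay_rate. assert (H := exp_pos 1). assert (H' := mu_pos (S k)).
  repeat apply Rmult_lt_0_compat; lra.
Qed.

Lemma flat_tower_decay_step (F : nat -> R -> R) x A k X :
  (forall t, 0 <= t <= x -> is_derive (F k) t (F (S k) t)) ->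
  (forall j t, 0 <= t <= x -> Rabs (F j t) <= A * Mseq mu j) ->
  F k 0 = 0 ->
  (forall t, 0 <= t <= x ->
     Rabs (F (S k) t) <= A * Mseq mu (S k) * exp (decay_rate (S k) * (t - X))) ->
  forall t, 0 <= t <= x ->
    Rabs (F k t) <= A * Mseq mu k * exp (decay_rate k * (t - (/ decay_rate k + X))).
Proof.
  intros HF HB H0 Hdecay t Ht.
  assert (HA : 0 <= A).
  { specialize (HB O 0 ltac:(lra)). simpl in HB. generalize (Rabs_pos (F O 0)). lra. }
  assert (HMk := Mseq_pos mu mu_pos k). assert (Hr := decay_rate_pos k).
  destruct (Rle_dec t (/ decay_rate k + X)) as [Hle|Hgt].
  - eapply Rle_trans.
    { apply (abs_le_softplus_of_derive (F k) (F (S k)) (A * Mseq mu (S k))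
               (decay_rate (S k)) X x); auto.
      - apply decay_rate_pos.
      - apply Rmult_le_pos; [lra|left; apply Mseq_pos, mu_pos]. }
    assert (Hexp := softplus_le_exp (mu (S k)) (mu (S (S k))) (t - X)
                      (conj (mu_pos (S k)) (mu_incr (S k)))).
    replace (A * Mseq mu (S k) * (2 / decay_rate (S k)
               * ln (1 + exp (decay_rate (S k) * (t - X)))))
      with (A * Mseq mu k * (mu (S k) / (exp 1 * mu (S (S k)))
              * ln (1 + exp (2 * exp 1 * mu (S (S k)) * (t - X)))))
      by (unfold decay_rate; simpl; field;
          split; [apply Rgt_not_eq, mu_pos|apply Rgt_not_eq, exp_pos]).
    apply Rmult_le_compat_l; [apply Rmult_le_pos; lra|].
    eapply Rle_trans; [exact Hexp|]. apply exp_le_compat.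
    replace (decay_rate k * (t - (/ decay_rate k + X)))
      with (decay_rate k * (t - X) - 1) by (field; lra).
    unfold decay_rate. lra.
  - eapply Rle_trans; [apply HB, Ht|].
    rewrite <- (Rmult_1_r (A * Mseq mu k)) at 1.
    apply Rmult_le_compat_l; [apply Rmult_le_pos; lra|].
    rewrite <- exp_0. apply exp_le_compat. apply Rmult_le_pos; lra.
Qed.

Lemma flat_tower_decay (F : nat -> R -> R) x A :
  (forall k t, 0 <= t <= x -> is_derive (F k) t (F (S k) t)) ->
  (forall k t, 0 <= t <= x -> Rabs (F k t) <= A * Mseq mu k) ->
  (forall k, F k 0 = 0) ->
  forall i k t, 0 <= t <= x ->
    Rabs (F k t) <= A * Mseq mu k * exp (decay_rate k * (t - decay_delay k i)).
Proof.
  intros HF HB H0 i. induction i as [|i IH]; intros k t Ht.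
  - simpl. rewrite Rminus_0_r.
    assert (HA : 0 <= A * Mseq mu k).
    { eapply Rle_trans; [apply Rabs_pos|apply (HB k t Ht)]. }
    eapply Rle_trans; [apply HB, Ht|].
    rewrite <- (Rmult_1_r (A * Mseq mu k)) at 1.
    apply Rmult_le_compat_l; [exact HA|].
    rewrite <- exp_0. apply exp_le_compat.
    apply Rmult_le_pos; [apply Rlt_le, decay_rate_pos|lra].
  - apply (flat_tower_decay_step F x A k); auto.
Qed.

Lemma decay_delay_sum k i :
  decay_delay k (S i) = sum_f_R0 (fun j => / decay_rate (k + j)) i.
Proof.
  revert k. induction i as [|i IH]; intros k.
  - simpl. rewrite Nat.add_0_r. ring.
  - change (decay_delay k (S (S i))) with (/ decay_rate k + decay_delay (S k) (S i)).
    rewrite IH, (decomp_sum (fun j => / decay_rate (k + j)) (S i)) by lia.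
    simpl. rewrite Nat.add_0_r.
    f_equal. apply sum_eq. intros j _. do 2 f_equal. lia.
Qed.

Lemma decay_delay_unbounded B : quasianalytic mu -> exists i, B <= decay_delay 0 i.
Proof.
  intros qa. apply NNPP. intros Hn. apply qa.
  assert (He := exp_pos 1).
  assert (E : forall n, sum_f_R0 (fun j => / mu (S j)) n = 2 * exp 1 * decay_delay 0 (S n)).
  { intros n. rewrite decay_delay_sum, scal_sum. apply sum_eq.
    intros j _. unfold decay_rate. simpl. field. split; [apply Rgt_not_eq, mu_pos|lra]. }
  destruct (ex_finite_lim_seq_incr (sum_n (fun j => / mu (S j))) (2 * exp 1 * B))
    as [l Hl].
  - intros n. rewrite !sum_n_Reals, tech5.
    generalize (Rinv_0_lt_compat _ (mu_pos (S (S n)))). lra.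
  - intros n. rewrite sum_n_Reals, E. apply Rmult_le_compat_l; [lra|].
    apply Rnot_lt_le. intros Hlt. apply Hn. exists (S n). lra.
  - exists l. exact Hl.
Qed.

Lemma flat_tower_vanishes_nonneg (F : nat -> R -> R) x A :
  quasianalytic mu -> 0 <= x ->
  (forall k t, 0 <= t <= x -> is_derive (F k) t (F (S k) t)) ->
  (forall k t, 0 <= t <= x -> Rabs (F k t) <= A * Mseq mu k) ->
  (forall k, F k 0 = 0) ->
  F O x = 0.
Proof.
  intros qa Hx HF HB H0.
  assert (HA : 0 <= A).
  { specialize (HB O 0 ltac:(lra)). simpl in HB. generalize (Rabs_pos (F O 0)). lra. }
  assert (Hr := decay_rate_pos 0).
  apply Rabs_eq_0, Rle_antisym; [|apply Rabs_pos].
  apply Rle_plus_epsilon. intros eps Heps. rewrite Rplus_0_l.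
  destruct (decay_delay_unbounded (x + ln ((A + 1) / eps) / decay_rate 0) qa) as [i Hi].
  assert (Hq : 0 < (A + 1) / eps) by (apply Rdiv_lt_0_compat; lra).
  eapply Rle_trans; [apply (flat_tower_decay F x A HF HB H0 i O x); lra|].
  simpl Mseq. rewrite Rmult_1_r.
  apply Rle_trans with (A * exp (- ln ((A + 1) / eps))).
  - apply Rmult_le_compat_l; [exact HA|]. apply exp_le_compat.
    apply (Rmult_le_reg_r (/ decay_rate 0)); [apply Rinv_0_lt_compat, Hr|].
    replace (- ln ((A + 1) / eps) * / decay_rate 0)
      with (x - (x + ln ((A + 1) / eps) / decay_rate 0)) by (field; lra).
    replace (decay_rate 0 * (x - decay_delay 0 i) * / decay_rate 0)
      with (x - decay_delay 0 i) by (field; lra).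
    lra.
  - rewrite exp_Ropp, exp_ln by exact Hq.
    replace (A * / ((A + 1) / eps)) with (eps * (A / (A + 1))) by (field; lra).
    rewrite <- (Rmult_1_r eps) at 2. apply Rmult_le_compat_l; [lra|].
    apply (Rmult_le_reg_r (A + 1)); [lra|]. field_simplify; lra.
Qed.

Lemma flat_beurling_tower_vanishes F d :
  quasianalytic mu -> beurling_tower mu F d -> (forall k, F k 0 = 0) ->
  forall x, -d < x < d -> F O x = 0.
Proof.
  intros qa HB H0 x Hx.
  assert (Hr : Rabs x < d) by (apply Rabs_def1; lra).
  destruct (beurling_tower_bound mu mu_pos F d (Rabs x) 1 HB Hr ltac:(lra)) as [c [_ Hb]].
  assert (Hb1 : forall k t, Rabs t <= Rabs x -> Rabs (F k t) <= c * Mseq mu k).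
  { intros k t Ht. specialize (Hb k t Ht). rewrite pow1, Rmult_1_r in Hb. exact Hb. }
  destruct (Rle_dec 0 x) as [Hx0|Hx0].
  - apply (flat_tower_vanishes_nonneg F x c); auto.
    + intros k t Ht. apply (proj1 HB). lra.
    + intros k t Ht. apply Hb1. rewrite !Rabs_right by lra. lra.
  - set (G := fun k t => (-1) ^ k * F k (- t)).
    replace (F O x) with (G O (- x)) by (unfold G; simpl; rewrite Ropp_involutive; ring).
    apply (flat_tower_vanishes_nonneg G (- x) c qa); [lra| | |].
    + intros k t Ht. unfold G.
      replace ((-1) ^ S k * F (S k) (- t)) with ((-1) ^ k * (-1 * F (S k) (- t))) by (simpl; ring).
      apply (is_derive_scal (fun t => F k (- t)) t ((-1) ^ k)).
      apply (is_derive_comp (F k) Ropp t (F (S k) (- t)) (-1)).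
      * apply (proj1 HB). lra.
      * exact (is_derive_opp (fun t => t) t 1 (is_derive_id t)).
    + intros k t Ht. unfold G. rewrite Rabs_mult, pow_1_abs, Rmult_1_l.
      apply Hb1. rewrite Rabs_Ropp, Rabs_right, Rabs_left; lra.
    + intros k. unfold G. rewrite Ropp_0, H0. ring.
Qed.

End DenjoyCarleman.

(** * Division by powers of x *)

Lemma is_derive_continuous (f : R -> R) (x l : R) : is_derive f x l -> continuous f x.
Proof.
  intros H. apply (ex_derive_continuous (K := R_AbsRing) (V := R_NormedModule) f x).
  exists l. exact H.
Qed.

Lemma is_derive_pow_id k t : is_derive (fun t => t ^ k) t (INR k * t ^ pred k).
Proof.
  replace (INR k * t ^ pred k) with (INR k * 1 * t ^ pred k) by ring.
  exact (is_derive_pow (fun t => t) k t 1 (is_derive_id t)).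
Qed.

Lemma is_derive_scale_arg (g : R -> R) a u l :
  is_derive g (a * u) l -> is_derive (fun u => g (a * u)) u (a * l).
Proof.
  intros H. assert (Ha : is_derive (fun u => a * u) u a) by (auto_derive; [exact I|ring]).
  exact (is_derive_comp g (fun u => a * u) u l a H Ha).
Qed.

Lemma in_interval_scale d t x : 0 <= t <= 1 -> -d < x < d -> -d < t * x < d.
Proof.
  intros Ht Hx. assert (Rabs x < d) by (apply Rabs_def1; lra).
  assert (Rabs (t * x) < d).
  { rewrite Rabs_mult, Rabs_right by lra. generalize (Rabs_pos x). nra. }
  apply Rabs_def2 in H0. lra.
Qed.

Lemma RInt_pow_01 k : RInt (fun t => t ^ k) 0 1 = / INR (S k).
Proof.
  apply is_RInt_unique.
  replace (/ INR (S k)) with (1 ^ S k / INR (S k) - 0 ^ S k / INR (S k)).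
  - apply is_RInt_pow.
  - rewrite pow1, pow_i by lia. field. apply not_0_INR. lia.
Qed.

Lemma locally_2d_scaled_interval d x t :
  -d < x < d -> 0 <= t <= 1 -> locally_2d (fun u v => -d < v * u < d) x t.
Proof.
  intros Hx Ht.
  set (a := Rabs x). assert (Ha : 0 <= a) by apply Rabs_pos.
  assert (Hax : a < d) by (apply Rabs_def1; lra).
  set (e := Rmin 1 ((d - a) / (2 * (a + 2)))).
  assert (He : 0 < e) by (apply Rmin_pos; [lra|apply Rdiv_lt_0_compat; lra]).
  assert (He1 : e <= 1) by apply Rmin_l.
  assert (He2 : e * (2 * (a + 2)) <= d - a).
  { apply Rle_trans with ((d - a) / (2 * (a + 2)) * (2 * (a + 2))).
    - apply Rmult_le_compat_r; [lra|apply Rmin_r].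
    - right. field. lra. }
  exists (mkposreal e He). simpl. intros u v Hu Hv.
  assert (Hua : Rabs u <= a + e).
  { replace u with (x + (u - x)) by ring. eapply Rle_trans; [apply Rabs_triang|]. fold a. lra. }
  assert (Hva : Rabs v <= 1 + e).
  { replace v with (t + (v - t)) by ring. eapply Rle_trans; [apply Rabs_triang|].
    rewrite (Rabs_right t) by lra. lra. }
  assert (Rabs (v * u) < d).
  { rewrite Rabs_mult. apply Rle_lt_trans with ((1 + e) * (a + e)); [|nra].
    apply Rmult_le_compat; auto using Rabs_pos. }
  apply Rabs_def2 in H. lra.
Qed.

(* Hadamard's lemma: G_k(x) = int_0^1 t^k F_(k+1)(t x) dt is the k-th derivative
   of (F_0(x) - F_0(0)) / x. *)
Definition hadamard_tower (F : nat -> R -> R) (k : nat) (x : R) : R :=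
  RInt (fun t => t ^ k * F (S k) (t * x)) 0 1.

Section Hadamard.
Variables (F : nat -> R -> R) (d : R).
Hypothesis HF : is_derive_tower F d.

Lemma is_derive_F_scaled j x t :
  -d < x < d -> 0 <= t <= 1 ->
  is_derive (fun t => F j (t * x)) t (x * F (S j) (t * x)).
Proof.
  intros Hx Ht.
  apply (is_derive_ext (fun t => F j (x * t))); [intros; rewrite Rmult_comm; reflexivity|].
  apply is_derive_scale_arg. rewrite Rmult_comm. apply HF, in_interval_scale; auto.
Qed.

Lemma is_derive_hadamard_integrand k t u :
  -d < t * u < d ->
  is_derive (fun u => t ^ k * F (S k) (t * u)) u (t ^ S k * F (S (S k)) (t * u)).
Proof.
  intros Hu. replace (t ^ S k * F (S (S k)) (t * u)) with (t ^ k * (t * F (S (S k)) (t * u)))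
    by (simpl; ring).
  apply (is_derive_scal (fun u => F (S k) (t * u))), is_derive_scale_arg, HF, Hu.
Qed.

Lemma continuous_hadamard_integrand k x t :
  -d < x < d -> 0 <= t <= 1 -> continuous (fun t => t ^ k * F (S k) (t * x)) t.
Proof.
  intros Hx Ht. apply (continuous_mult (fun t => t ^ k) (fun t => F (S k) (t * x))).
  - apply (is_derive_continuous _ _ _ (is_derive_pow_id k t)).
  - apply (is_derive_continuous _ _ _ (is_derive_F_scaled (S k) x t Hx Ht)).
Qed.

Lemma ex_RInt_hadamard_integrand k x :
  -d < x < d -> ex_RInt (fun t => t ^ k * F (S k) (t * x)) 0 1.
Proof.
  intros Hx. apply (ex_RInt_continuous (V := R_CompleteNormedModule)). intros t Ht.
  rewrite Rmin_left, Rmax_right in Ht by lra. apply continuous_hadamard_integrand; auto.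
Qed.

Lemma hadamard_tower_is_tower : is_derive_tower (hadamard_tower F) d.
Proof.
  intros k x Hx. unfold hadamard_tower.
  rewrite (RInt_ext (fun t => t ^ S k * F (S (S k)) (t * x))
             (fun t => Derive (fun u => t ^ k * F (S k) (t * u)) x)).
  2:{ intros t Ht. rewrite Rmin_left, Rmax_right in Ht by lra.
      symmetry.
      apply is_derive_unique, is_derive_hadamard_integrand, in_interval_scale; auto; lra. }
  apply (is_derive_RInt_param (fun u t => t ^ k * F (S k) (t * u)) 0 1 x).
  - generalize (locally_interval d x Hx). apply filter_imp. intros y Hy t Ht.
    rewrite Rmin_left, Rmax_right in Ht by lra.
    eexists. apply is_derive_hadamard_integrand, in_interval_scale; auto.
  - intros t Ht. rewrite Rmin_left, Rmax_right in Ht by lra.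
    apply (continuity_2d_pt_ext_loc (fun u v => v ^ S k * F (S (S k)) (v * u))).
    + generalize (locally_2d_scaled_interval d x t Hx Ht). apply locally_2d_impl.
      apply locally_2d_forall. intros u v Huv.
      symmetry. apply is_derive_unique, is_derive_hadamard_integrand, Huv.
    + apply continuity_2d_pt_mult.
      * apply (continuity_1d_2d_pt_comp (fun v => v ^ S k) (fun u v => v)).
        -- apply (is_derive_continuity_pt _ _ _ (is_derive_pow_id (S k) t)).
        -- apply continuity_2d_pt_id2.
      * apply (continuity_1d_2d_pt_comp (F (S (S k))) (fun u v => v * u)).
        -- apply (is_derive_continuity_pt _ _ (F (S (S (S k))) (t * x))).
           apply HF, in_interval_scale; auto.
        -- apply continuity_2d_pt_mult; [apply continuity_2d_pt_id2|apply continuity_2d_pt_id1].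
  - generalize (locally_interval d x Hx). apply filter_imp. intros y Hy.
    apply ex_RInt_hadamard_integrand, Hy.
Qed.

Lemma hadamard_tower_spec x : -d < x < d -> F O x - F O 0 = x * hadamard_tower F O x.
Proof.
  intros Hx. unfold hadamard_tower.
  assert (H : is_RInt (fun t => x * F 1%nat (t * x)) 0 1 (minus (F O (1 * x)) (F O (0 * x)))).
  { apply (is_RInt_derive (fun t => F O (t * x))); intros t Ht;
      rewrite Rmin_left, Rmax_right in Ht by lra.
    - apply is_derive_F_scaled; auto.
    - apply (is_derive_continuous _ _ (x * (x * F 2%nat (t * x)))).
      apply (is_derive_scal (fun t => F 1%nat (t * x))), is_derive_F_scaled; auto. }
  rewrite Rmult_1_l, Rmult_0_l in H.
  change (minus (F O x) (F O 0)) with (F O x - F O 0) in H.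
  rewrite <- (is_RInt_unique _ _ _ _ H).
  rewrite <- (RInt_scal (V := R_CompleteNormedModule)) by (apply ex_RInt_hadamard_integrand, Hx).
  apply RInt_ext. intros t _. change (scal x ?y) with (x * y). simpl. ring.
Qed.

Lemma hadamard_tower_at_0 k : hadamard_tower F k 0 = F (S k) 0 / INR (S k).
Proof.
  unfold hadamard_tower.
  rewrite (RInt_ext _ (fun t => scal (F (S k) 0) (t ^ k)))
    by (intros t _; rewrite Rmult_0_r; change (t ^ k * F (S k) 0 = F (S k) 0 * t ^ k); ring).
  rewrite (RInt_scal (V := R_CompleteNormedModule)), RInt_pow_01; [reflexivity|].
  apply (ex_RInt_continuous (V := R_CompleteNormedModule)). intros t _.
  apply (is_derive_continuous _ _ _ (is_derive_pow_id k t)).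
Qed.

End Hadamard.

Lemma continuity_pt_punctured_le (A B : R -> R) a d :
  0 < d -> continuity_pt A a -> continuity_pt B a ->
  (forall x, 0 < Rabs (x - a) < d -> A x <= B x) -> A a <= B a.
Proof.
  intros Hd HA HB Hle. apply Rnot_lt_le. intros Hlt.
  assert (Hc := continuity_pt_minus _ _ _ HA HB).
  assert (He : 0 < A a - B a) by lra.
  destruct (proj1 (continuity_pt_locally _ a) Hc (mkposreal _ He)) as [eps Heps].
  set (u := a + Rmin eps d / 2).
  assert (Hm : 0 < Rmin eps d) by (apply Rmin_pos; [apply cond_pos|lra]).
  assert (Hu : 0 < Rabs (u - a) < Rmin eps d).
  { unfold u. replace (a + Rmin eps d / 2 - a) with (Rmin eps d / 2) by ring.
    rewrite Rabs_right; lra. }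
  assert (H1 := Heps u (Rlt_le_trans _ _ _ (proj2 Hu) (Rmin_l _ _))).
  assert (H2 := Hle u (conj (proj1 Hu) (Rlt_le_trans _ _ _ (proj2 Hu) (Rmin_r _ _)))).
  simpl in H1. apply Rabs_def2 in H1. unfold minus_fct in H1. lra.
Qed.

Lemma continuity_pt_punctured_eq (A B : R -> R) a d :
  0 < d -> continuity_pt A a -> continuity_pt B a ->
  (forall x, 0 < Rabs (x - a) < d -> A x = B x) -> A a = B a.
Proof.
  intros Hd HA HB E. apply Rle_antisym;
    apply (continuity_pt_punctured_le _ _ a d); auto; intros x Hx; rewrite E; auto; lra.
Qed.

Section BeurlingDivision.
Variable mu : nat -> R.
Hypothesis mu_pos : forall k, 0 < mu k.
Hypothesis dc : derivation_closed mu.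

Lemma beurling_hadamard_tower F d :
  beurling_tower mu F d -> beurling_tower mu (hadamard_tower F) d.
Proof.
  intros HB. split; [apply hadamard_tower_is_tower, HB|].
  (* M_(k+1) <= D^(k+1) M_k turns the bound for F_(k+1) with s / D into one for G_k with s. *)
  intros r s Hr Hs. destruct dc as [D [HD HMD]].
  destruct (beurling_tower_bound mu mu_pos F d r (s / D) HB Hr ltac:(apply Rdiv_lt_0_compat; lra))
    as [c [Hc Hcb]].
  exists (c * s). intros k x Hx.
  assert (Hxd : -d < x < d) by (apply Rabs_le_between in Hx; generalize (Rabs_pos x); lra).
  unfold hadamard_tower. eapply Rle_trans.
  { apply (abs_RInt_le_const _ 0 1 (c * (s / D) ^ S k * Mseq mu (S k)));
      [lra|apply (ex_RInt_hadamard_integrand F d); [apply HB|exact Hxd]|].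
    intros t Ht. rewrite Rabs_mult, <- (Rmult_1_l (c * _ * _)).
    apply Rmult_le_compat; try apply Rabs_pos.
    - rewrite <- RPow_abs, Rabs_right by lra. rewrite <- (pow1 k). apply pow_incr. lra.
    - apply Hcb. rewrite Rabs_mult, Rabs_right by lra.
      generalize (Rabs_pos x). nra. }
  rewrite Rminus_0_r, Rmult_1_l.
  apply Rle_trans with (c * (s / D) ^ S k * (D ^ S k * Mseq mu k)).
  - apply Rmult_le_compat_l, HMD.
    apply Rmult_le_pos; [exact Hc|apply pow_le, Rlt_le, Rdiv_lt_0_compat; lra].
  - right. rewrite <- Rmult_assoc, (Rmult_assoc c), <- Rpow_mult_distr.
    replace (s / D * D) with s by (field; lra). simpl. ring.
Qed.

Lemma beurling_divide_xn d n : forall F,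
  beurling_tower mu F d -> (forall i, (i < n)%nat -> F i 0 = 0) ->
  exists G, beurling_tower mu G d /\
    (forall x, -d < x < d -> F O x = x ^ n * G O x) /\ (G O 0 = 0 -> F n 0 = 0).
Proof.
  induction n as [|n IH]; intros F HF Hz.
  - exists F. split; [exact HF|split; [|auto]]. intros x _. simpl. ring.
  - assert (HH := beurling_hadamard_tower F d HF).
    destruct (IH (hadamard_tower F) HH) as [G [HG [HGx HG0]]].
    { intros i Hi. rewrite hadamard_tower_at_0, Hz by lia. unfold Rdiv. ring. }
    exists G. split; [exact HG|split].
    + intros x Hx.
      rewrite <- (Rminus_0_r (F O x)), <- (Hz O), (hadamard_tower_spec F d (proj1 HF)),
        HGx by (exact Hx || lia).
      simpl. ring.
    + intros E. specialize (HG0 E). rewrite hadamard_tower_at_0 in HG0.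
      unfold Rdiv in HG0. apply Rmult_integral in HG0. destruct HG0 as [H|H]; [exact H|].
      exfalso. revert H. apply Rinv_neq_0_compat, not_0_INR. lia.
Qed.

Lemma beurling_divide_by_bound d n : forall F K,
  0 < d -> beurling_tower mu F d ->
  (forall x, -d < x < d -> Rabs (F O x) <= K * Rabs x ^ n) ->
  exists G, beurling_tower mu G d /\ forall x, -d < x < d -> F O x = x ^ n * G O x.
Proof.
  induction n as [|n IH]; intros F K Hd HF Hb.
  - exists F. split; auto. intros x _. simpl. ring.
  - assert (HF0 : F O 0 = 0).
    { assert (X := Hb 0 ltac:(lra)). rewrite Rabs_R0, pow_i, Rmult_0_r in X by lia.
      apply Rabs_eq_0. generalize (Rabs_pos (F O 0)). lra. }
    assert (HH := beurling_hadamard_tower F d HF).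
    assert (Hspec : forall x, -d < x < d -> F O x = x * hadamard_tower F O x).
    { intros x Hx. rewrite <- (hadamard_tower_spec F d (proj1 HF)) by exact Hx. lra. }
    destruct (IH (hadamard_tower F) K Hd HH) as [G [HG HGx]].
    + assert (Hpunct : forall x, 0 < Rabs (x - 0) < d ->
                Rabs (hadamard_tower F O x) <= K * Rabs x ^ n).
      { intros x Hx. rewrite Rminus_0_r in Hx.
        assert (Hxd : -d < x < d) by (destruct Hx as [_ Hx]; apply Rabs_def2 in Hx; lra).
        assert (X := Hb x Hxd). rewrite Hspec, Rabs_mult in X by exact Hxd.
        simpl in X. apply (Rmult_le_reg_l (Rabs x)); lra. }
      intros x Hx. destruct (Req_dec x 0) as [->|Hx0].
      * apply (continuity_pt_punctured_le (fun y => Rabs (hadamard_tower F O y))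
                 (fun y => K * Rabs y ^ n) 0 d Hd); [| |exact Hpunct].
        -- apply (continuity_pt_comp (hadamard_tower F O) Rabs), Rcontinuity_abs.
           apply (is_derive_continuity_pt _ _ _ (proj1 HH O 0 ltac:(lra))).
        -- apply continuity_pt_mult; [apply continuity_pt_const; intros ? ?; reflexivity|].
           apply (continuity_pt_comp Rabs (fun y => y ^ n)); [apply Rcontinuity_abs|].
           apply derivable_continuous_pt, derivable_pt_pow.
      * apply Hpunct. rewrite Rminus_0_r. split; [apply Rabs_pos_lt, Hx0|apply Rabs_def1; lra].
    + exists G. split; auto. intros x Hx. rewrite Hspec, HGx by exact Hx. simpl. ring.
Qed.

End BeurlingDivision.

(** * Inversion *)

Section LogConvex.
Variable m : nat -> R.
Hypothesis m_pos : forall k, 0 < m k.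
Hypothesis m_lc : log_convex m.

Lemma log_convex_ratio_mono p q : (p <= q)%nat -> m (S p) * m q <= m (S q) * m p.
Proof.
  induction 1 as [|q Hpq IH]; [lra|].
  assert (A := m_lc q). assert (P1 := m_pos p). assert (P2 := m_pos q).
  assert (P3 := m_pos (S q)). assert (P5 := m_pos (S p)).
  apply (Rmult_le_reg_r (m q)); auto.
  apply Rle_trans with (m (S q) * m p * m (S q)); [nra|].
  simpl in A. nra.
Qed.

Lemma log_convex_shift n a b : (b <= a)%nat -> m (b + n) * m a <= m (a + n) * m b.
Proof.
  intros Hab. induction n as [|n IH].
  - rewrite !Nat.add_0_r. lra.
  - assert (R1 := log_convex_ratio_mono (b + n) (a + n) ltac:(lia)).
    rewrite !Nat.add_succ_r.
    assert (P1 := m_pos (b + n)). assert (P2 := m_pos (a + n)).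
    assert (P3 := m_pos a). assert (P4 := m_pos b).
    assert (P5 := m_pos (S (b + n))). assert (P6 := m_pos (S (a + n))).
    apply (Rmult_le_reg_r (m (b + n) * m (a + n))); [nra|].
    apply Rle_trans with ((m (S (a + n)) * m (b + n)) * (m (b + n) * m a)).
    + replace (m (S (b + n)) * m a * (m (b + n) * m (a + n)))
        with ((m (S (b + n)) * m (a + n)) * (m (b + n) * m a)) by ring.
      apply Rmult_le_compat_r; [nra|lra].
    + replace (m (S (a + n)) * m b * (m (b + n) * m (a + n)))
        with ((m (S (a + n)) * m (b + n)) * (m (a + n) * m b)) by ring.
      apply Rmult_le_compat_l; [nra|lra].
Qed.

Lemma log_convex_mid k i :
  (1 <= i)%nat -> (i <= k - 1)%nat -> m i * m (k - i) <= m 1 * m (k - 1).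
Proof.
  intros H1 H2. assert (X := log_convex_shift (k - 1 - i) i 1 H1).
  replace (1 + (k - 1 - i))%nat with (k - i)%nat in X by lia.
  replace (i + (k - 1 - i))%nat with (k - 1)%nat in X by lia. lra.
Qed.

End LogConvex.

Definition mseq_gain (mu : nat -> R) (k : nat) : R :=
  mseq mu 1 * mseq mu (k - 1) / mseq mu k.

Section MseqGain.
Variable mu : nat -> R.
Hypothesis mu_pos : forall k, 0 < mu k.
Hypothesis lcm : log_convex (mseq mu).
Hypothesis mlim : is_lim_seq (fun k => Rpower (mseq mu k) (/ INR k)) p_infty.

Lemma mseq_gain_pos k : 0 < mseq_gain mu k.
Proof.
  apply Rdiv_lt_0_compat; [apply Rmult_lt_0_compat|]; apply mseq_pos, mu_pos.
Qed.

Lemma binom_Mseq_le k i : (1 <= i)%nat -> (i <= k - 1)%nat ->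
  binom k i * Mseq mu i * Mseq mu (k - i) <= mseq_gain mu k * Mseq mu k.
Proof.
  intros H1 H2.
  assert (X := log_convex_mid (mseq mu) (mseq_pos mu mu_pos) lcm k i H1 H2).
  assert (Pk := mseq_pos mu mu_pos k). assert (Pf := INR_fact_lt_0 k).
  assert (Pi := INR_fact_lt_0 i). assert (Pki := INR_fact_lt_0 (k - i)).
  unfold mseq_gain, Binomial.C. rewrite !(Mseq_mseq mu).
  replace (INR (fact k) / (INR (fact i) * INR (fact (k - i)))
           * (mseq mu i * INR (fact i)) * (mseq mu (k - i) * INR (fact (k - i))))
    with (mseq mu i * mseq mu (k - i) * INR (fact k)) by (field; lra).
  replace (mseq mu 1 * mseq mu (k - 1) / mseq mu k * (mseq mu k * INR (fact k)))
    with (mseq mu 1 * mseq mu (k - 1) * INR (fact k)) by (field; lra).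
  apply Rmult_le_compat_r; lra.
Qed.

Lemma mseq_ratio_unbounded c : exists k, (1 <= k)%nat /\ c * mseq mu (k - 1) < mseq mu k.
Proof.
  apply NNPP. intros Hn.
  assert (Hb : forall k, (1 <= k)%nat -> mseq mu k <= c * mseq mu (k - 1)).
  { intros k Hk. apply Rnot_lt_le. intros Hl. apply Hn. exists k; auto. }
  assert (H0 : mseq mu 0 = 1) by (unfold mseq; simpl; lra).
  assert (Hc : 0 < c).
  { specialize (Hb 1%nat (le_n 1)). simpl in Hb. rewrite H0 in Hb.
    generalize (mseq_pos mu mu_pos 1). lra. }
  assert (Hp : forall k, mseq mu k <= c ^ k).
  { induction k as [|k IH]; [rewrite H0; simpl; lra|].
    specialize (Hb (S k) ltac:(lia)). simpl in Hb. rewrite Nat.sub_0_r in Hb.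
    simpl. apply Rle_trans with (c * mseq mu k); auto. apply Rmult_le_compat_l; lra. }
  apply is_lim_seq_spec in mlim. destruct (mlim c) as [N HN].
  specialize (HN (S N) ltac:(lia)). unfold Rpower in HN.
  assert (Hk : 0 < INR (S N)) by (apply lt_0_INR; lia).
  assert (E : / INR (S N) * ln (mseq mu (S N)) <= ln c).
  { apply (Rmult_le_reg_l (INR (S N))); auto. rewrite <- Rmult_assoc, Rinv_r by lra.
    rewrite Rmult_1_l, <- ln_pow by exact Hc. apply ln_le; [apply mseq_pos, mu_pos|apply Hp]. }
  apply exp_le_compat in E. rewrite exp_ln in E by exact Hc. lra.
Qed.

Lemma mseq_gain_small eta : 0 < eta ->
  exists K, forall k, (K <= k)%nat -> mseq_gain mu k <= eta.
Proof.
  intros He. destruct (mseq_ratio_unbounded (mseq mu 1 / eta)) as [k0 [Hk0 Hr]].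
  exists k0. intros k Hk.
  assert (X := log_convex_ratio_mono (mseq mu) (mseq_pos mu mu_pos) lcm (k0 - 1) (k - 1)
                 ltac:(lia)).
  replace (S (k0 - 1)) with k0 in X by lia. replace (S (k - 1)) with k in X by lia.
  assert (P1 := mseq_pos mu mu_pos k). assert (P2 := mseq_pos mu mu_pos (k - 1)).
  assert (P3 := mseq_pos mu mu_pos (k0 - 1)). assert (P5 := mseq_pos mu mu_pos 1).
  assert (A : mseq mu 1 * mseq mu (k0 - 1) < eta * mseq mu k0).
  { apply (Rmult_lt_compat_l eta) in Hr; [|exact He].
    replace (eta * (mseq mu 1 / eta * mseq mu (k0 - 1))) with (mseq mu 1 * mseq mu (k0 - 1))
      in Hr by (field; lra).
    exact Hr. }
  unfold mseq_gain. apply (Rmult_le_reg_r (mseq mu k)); [exact P1|].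
  unfold Rdiv. rewrite Rmult_assoc, Rinv_l, Rmult_1_r by lra.
  apply (Rmult_le_reg_r (mseq mu (k0 - 1))); [exact P3|].
  apply Rle_trans with (eta * mseq mu k0 * mseq mu (k - 1)); [nra|].
  nra.
Qed.

End MseqGain.

Lemma mul_tower_0 A B x : mul_tower A B O x = A O x * B O x.
Proof. unfold mul_tower. cbn [sum_f_R0 Nat.sub]. rewrite C_n_0. ring. Qed.

Definition inv_tower (U : nat -> R -> R) : nat -> R -> R := Derive_n (fun y => / U O y).

Section InverseTower.
Variables (U : nat -> R -> R) (d : R).
Hypothesis HU : is_derive_tower U d.
Hypothesis HU0 : forall x, -d < x < d -> U O x <> 0.

Lemma inv_tower_upto n : exists W, is_derive_tower_upto n W d /\ forall x, W O x = / U O x.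
Proof.
  (* (1/U)' = - U' (1/U)^2, so n + 1 derivatives of 1/U come from n of them. *)
  induction n as [|n [W [HW HW0]]].
  - exists (fun _ x => / U O x). split; [intros k x Hk; lia|auto].
  - set (Q := mul_tower (fun j => U (S j)) (mul_tower W W)).
    assert (HQ : is_derive_tower_upto n Q d).
    { apply mul_tower_upto_is_tower_upto; [|apply mul_tower_upto_is_tower_upto; auto].
      intros k x _ Hx. apply HU, Hx. }
    exists (fun k => match k with O => fun x => / U O x | S k => fun x => - Q k x end).
    split; [|auto]. intros [|k] x Hk Hx.
    + replace (- Q O x) with (- U 1%nat x / U O x ^ 2).
      * apply is_derive_inv; [apply HU, Hx|apply HU0, Hx].
      * unfold Q. rewrite !mul_tower_0, !HW0. field. apply HU0, Hx.
    + apply (is_derive_opp (Q k)), HQ; [lia|exact Hx].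
Qed.

Lemma inv_tower_is_tower : is_derive_tower (inv_tower U) d.
Proof.
  intros k x Hx. apply Derive_correct.
  destruct (inv_tower_upto (S k)) as [W [HW HW0]].
  refine (proj1 (tower_upto_Derive_n (S k) W d (fun y => / U O y) HW _ (S k) x (le_n _) Hx)).
  intros y _. rewrite HW0. reflexivity.
Qed.

Lemma mul_inv_tower_S k x : -d < x < d -> mul_tower U (inv_tower U) (S k) x = 0.
Proof.
  intros Hx. rewrite <- (Derive_n_const k 1 x).
  symmetry. apply (tower_Derive_n (mul_tower U (inv_tower U)) d (fun _ => 1));
    [apply mul_tower_is_tower; [exact HU|exact inv_tower_is_tower]| |exact Hx].
  intros y Hy. rewrite mul_tower_0. unfold inv_tower. simpl. field. apply HU0, Hy.
Qed.

Lemma inv_tower_recurrence k x : -d < x < d ->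
  U O x * inv_tower U (S k) x =
  - sum_f_R0 (fun i => binom (S k) (S i) * U (S i) x * inv_tower U (k - i)%nat x) k.
Proof.
  intros Hx. assert (Z := mul_inv_tower_S k x Hx). unfold mul_tower in Z.
  rewrite decomp_sum in Z by lia. simpl pred in Z. rewrite C_n_0, Nat.sub_0_r in Z.
  cbn [Nat.sub] in Z. lra.
Qed.

Lemma inv_tower_abs_recurrence m k x :
  0 < m -> -d < x < d -> m <= Rabs (U O x) ->
  Rabs (inv_tower U (S k) x) <=
  / m * sum_f_R0 (fun i => binom (S k) (S i) * Rabs (U (S i) x)
                           * Rabs (inv_tower U (k - i)%nat x)) k.
Proof.
  intros Hm Hx Hmx. assert (HUx := HU0 x Hx).
  assert (E : inv_tower U (S k) x =
     - sum_f_R0 (fun i => binom (S k) (S i) * U (S i) x * inv_tower U (k - i)%nat x) k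
     / U O x).
  { apply (Rmult_eq_reg_l (U O x)); [|exact HUx].
    rewrite inv_tower_recurrence by exact Hx. field. exact HUx. }
  rewrite E. unfold Rdiv. rewrite Rabs_mult, Rabs_Ropp, Rabs_inv, Rmult_comm.
  apply Rmult_le_compat.
  - apply Rlt_le, Rinv_0_lt_compat. lra.
  - apply Rabs_pos.
  - apply Rinv_le_contravar; assumption.
  - eapply Rle_trans; [apply Rsum_abs|]. apply sum_Rle. intros i _.
    rewrite !Rabs_mult, (Rabs_right (binom _ _)) by (apply Rle_ge, binom_nonneg). lra.
Qed.

End InverseTower.

Lemma sum_half_pow_le_1 n : sum_f_R0 (fun i => (1 / 2) ^ S i) n <= 1.
Proof.
  replace (1 / 2) with (/ 2) by field.
  rewrite (sum_eq _ (fun i => (/ 2) ^ i * / 2)) by (intros; simpl; ring).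
  rewrite <- scal_sum, tech3 by lra.
  assert (0 < (/ 2) ^ S n) by (apply pow_lt; lra).
  replace (/ 2 * ((1 - (/ 2) ^ S n) / (1 - / 2))) with (1 - (/ 2) ^ S n) by field. lra.
Qed.

Lemma sum_f_R0_term_le (f : nat -> R) n j :
  (forall i, 0 <= f i) -> (j <= n)%nat -> f j <= sum_f_R0 f n.
Proof.
  intros Hf Hj. induction n as [|n IH].
  - replace j with O by lia. simpl. lra.
  - simpl. destruct (Nat.eq_dec j (S n)) as [->|Hne].
    + assert (0 <= sum_f_R0 f n) by (apply cond_pos_sum, Hf). lra.
    + specialize (IH ltac:(lia)). generalize (Hf (S n)). lra.
Qed.

Lemma inverse_gain_le m c B g :
  0 < m -> 0 <= c -> 2 * c / (m * m) <= B -> 0 <= g <= m / (2 * (c + 1)) ->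
  / m * (c * B * g + c / m) <= B.
Proof.
  intros Hm Hc HB Hg.
  assert (HB0 : 0 <= B).
  { eapply Rle_trans; [|exact HB]. apply Rmult_le_pos; [lra|].
    apply Rlt_le, Rinv_0_lt_compat. nra. }
  assert (E1 : / m * (c * B * g) <= B / 2).
  { apply Rle_trans with (/ m * (c * B * (m / (2 * (c + 1))))).
    - apply Rmult_le_compat_l; [apply Rlt_le, Rinv_0_lt_compat, Hm|].
      apply Rmult_le_compat_l; [nra|apply Hg].
    - replace (/ m * (c * B * (m / (2 * (c + 1))))) with (c / (c + 1) * (B / 2))
        by (field; lra).
      assert (c / (c + 1) <= 1).
      { apply (Rmult_le_reg_r (c + 1)); [lra|]. field_simplify; lra. }
      assert (0 <= c / (c + 1)) by (apply Rmult_le_pos; [lra|apply Rlt_le, Rinv_0_lt_compat; lra]).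
      nra. }
  assert (E2 : / m * (c / m) <= B / 2).
  { replace (/ m * (c / m)) with (2 * c / (m * m) / 2) by (field; lra). lra. }
  rewrite Rmult_plus_distr_l. lra.
Qed.

Section InverseRecurrence.
Variable mu : nat -> R.
Hypothesis mu_pos : forall k, 0 < mu k.
Hypothesis lcm : log_convex (mseq mu).
Variables (m c s : R).
Hypotheses (m_pos : 0 < m) (c_nonneg : 0 <= c) (s_pos : 0 < s).

Fixpoint inverse_crude_bound (K : nat) : R :=
  match K with
  | O => / m
  | S K => inverse_crude_bound K + / m * sum_f_R0 (fun i =>
             binom (S K) (S i) * (c * (s / 2) ^ S i * Mseq mu (S i))) K * inverse_crude_bound K
  end.

(* u j and w j stand for |U_j(x)| and |(1/U)_j(x)| at a fixed point x. *)
Variables (u w : nat -> R).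
Hypothesis u_bound : forall j, 0 <= u j <= c * (s / 2) ^ j * Mseq mu j.
Hypothesis w_nonneg : forall j, 0 <= w j.
Hypothesis w0_le : w O <= / m.
Hypothesis w_rec : forall k,
  w (S k) <= / m * sum_f_R0 (fun i => binom (S k) (S i) * u (S i) * w (k - i)%nat) k.

Lemma inverse_crude_bound_spec K :
  0 <= inverse_crude_bound K /\ forall j, (j <= K)%nat -> w j <= inverse_crude_bound K.
Proof.
  assert (Hm : 0 < / m) by (apply Rinv_0_lt_compat, m_pos).
  induction K as [|K [Hb HbK]]; simpl.
  - split; [lra|]. intros j Hj. replace j with O by lia. exact w0_le.
  - set (S0 := sum_f_R0 _ K).
    assert (HS0 : 0 <= S0).
    { apply cond_pos_sum. intros i. apply Rmult_le_pos; [apply binom_nonneg|].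
      apply (Rle_trans _ _ _ (proj1 (u_bound (S i))) (proj2 (u_bound (S i)))). }
    assert (0 <= / m * S0 * inverse_crude_bound K) by (repeat apply Rmult_le_pos; lra).
    split; [lra|]. intros j Hj.
    destruct (Nat.eq_dec j (S K)) as [->|Hne]; [|specialize (HbK j ltac:(lia)); lra].
    eapply Rle_trans; [apply w_rec|].
    apply Rle_trans with (/ m * S0 * inverse_crude_bound K); [|lra].
    rewrite Rmult_assoc. apply Rmult_le_compat_l; [lra|].
    unfold S0. rewrite Rmult_comm, scal_sum. apply sum_Rle. intros i Hi.
    apply Rmult_le_compat.
    + apply Rmult_le_pos; [apply binom_nonneg|apply u_bound].
    + apply w_nonneg.
    + apply Rmult_le_compat_l; [apply binom_nonneg|apply u_bound].
    + apply HbK. lia.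
Qed.

Lemma inverse_recurrence_term n i B :
  0 <= B -> (i <= n)%nat ->
  (forall j, (1 <= j <= n)%nat -> w j <= B * s ^ j * Mseq mu j) ->
  binom (S n) (S i) * u (S i) * w (n - i)%nat <=
  (1 / 2) ^ S i * ((c * B * mseq_gain mu (S n) + c / m) * (s ^ S n * Mseq mu (S n))).
Proof.
  (* For i < n, log-convexity bounds the binomial term by mseq_gain (S n);
     the term i = n uses w 0 <= 1/m. *)
  intros HB Hi IH.
  assert (Hgain := mseq_gain_pos mu mu_pos (S n)).
  assert (HM := Mseq_pos mu mu_pos (S n)).
  assert (Hsplit : (s / 2) ^ S i = (1 / 2) ^ S i * s ^ S i)
    by (rewrite <- Rpow_mult_distr; f_equal; field).
  assert (Hh : 0 < (1 / 2) ^ S i) by (apply pow_lt; lra).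
  assert (Hsn : 0 < s ^ S n) by (apply pow_lt; lra).
  destruct (Nat.eq_dec i n) as [->|Hne].
  - rewrite C_n_n, Nat.sub_diag, Rmult_1_l.
    apply Rle_trans with ((c * (s / 2) ^ S n * Mseq mu (S n)) * / m).
    + apply Rmult_le_compat; [apply u_bound|apply w_nonneg|apply u_bound|exact w0_le].
    + rewrite Hsplit.
      assert (0 <= c * B * mseq_gain mu (S n)) by (apply Rmult_le_pos; [apply Rmult_le_pos|]; lra).
      assert (0 <= c / m) by (apply Rmult_le_pos; [lra|apply Rlt_le, Rinv_0_lt_compat, m_pos]).
      apply Rle_trans with ((1 / 2) ^ S n * (c / m * (s ^ S n * Mseq mu (S n)))).
      * right. field. lra.
      * apply Rmult_le_compat_l; [lra|]. apply Rmult_le_compat_r; [nra|lra].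
  - assert (Hbin := binom_Mseq_le mu mu_pos lcm (S n) (S i) ltac:(lia) ltac:(lia)).
    replace (S n - S i)%nat with (n - i)%nat in Hbin by lia.
    assert (Hw := IH (n - i)%nat ltac:(lia)).
    apply Rle_trans with (binom (S n) (S i) * (c * (s / 2) ^ S i * Mseq mu (S i))
                          * (B * s ^ (n - i) * Mseq mu (n - i))).
    + apply Rmult_le_compat; [|apply w_nonneg| |exact Hw].
      * apply Rmult_le_pos; [apply binom_nonneg|apply u_bound].
      * apply Rmult_le_compat_l; [apply binom_nonneg|apply u_bound].
    + assert (Hs : s ^ S i * s ^ (n - i) = s ^ S n) by (rewrite <- pow_add; f_equal; lia).
      apply Rle_trans with ((1 / 2) ^ S i * (c * B) * (s ^ S i * s ^ (n - i))
                            * (binom (S n) (S i) * Mseq mu (S i) * Mseq mu (n - i))).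
      * right. rewrite Hsplit. ring.
      * rewrite Hs.
        assert (0 <= (1 / 2) ^ S i * (c * B) * s ^ S n)
          by (apply Rmult_le_pos; [apply Rmult_le_pos|]; nra).
        apply Rle_trans
          with ((1 / 2) ^ S i * (c * B) * s ^ S n * (mseq_gain mu (S n) * Mseq mu (S n))).
        -- apply Rmult_le_compat_l; assumption.
        -- assert (0 <= c / m) by (apply Rmult_le_pos; [lra|apply Rlt_le, Rinv_0_lt_compat, m_pos]).
           assert (0 <= s ^ S n * Mseq mu (S n)) by nra.
           apply Rle_trans
             with ((1 / 2) ^ S i * ((c * B * mseq_gain mu (S n)) * (s ^ S n * Mseq mu (S n)))).
           ++ right. ring.
           ++ apply Rmult_le_compat_l; [lra|]. apply Rmult_le_compat_r; lra.
Qed.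

Lemma inverse_recurrence_bound K B :
  (forall k, (K <= k)%nat -> mseq_gain mu k <= m / (2 * (c + 1))) ->
  2 * c / (m * m) <= B ->
  (forall j, (j <= K)%nat -> w j <= B * s ^ j * Mseq mu j) ->
  forall j, w j <= B * s ^ j * Mseq mu j.
Proof.
  intros Hgain HB Hinit.
  assert (HB0 : 0 <= B).
  { eapply Rle_trans; [|exact HB]. apply Rmult_le_pos; [lra|].
    apply Rlt_le, Rinv_0_lt_compat. nra. }
  assert (Main : forall n j, (j <= n)%nat -> w j <= B * s ^ j * Mseq mu j).
  { induction n as [|n IH]; intros j Hj; [apply Hinit; lia|].
    destruct (Nat.eq_dec j (S n)) as [->|Hne]; [|apply IH; lia].
    destruct (Compare_dec.le_lt_dec (S n) K) as [HnK|HnK]; [apply Hinit, HnK|].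
    set (X := (c * B * mseq_gain mu (S n) + c / m) * (s ^ S n * Mseq mu (S n))).
    assert (HX : 0 <= X).
    { assert (Hg := mseq_gain_pos mu mu_pos (S n)).
      assert (HM := Mseq_pos mu mu_pos (S n)). assert (0 < s ^ S n) by (apply pow_lt; lra).
      assert (0 <= c / m) by (apply Rmult_le_pos; [lra|apply Rlt_le, Rinv_0_lt_compat, m_pos]).
      unfold X. apply Rmult_le_pos; [|nra]. assert (0 <= c * B) by nra. nra. }
    apply Rle_trans with (/ m * X).
    - eapply Rle_trans; [apply w_rec|]. apply Rmult_le_compat_l.
      { apply Rlt_le, Rinv_0_lt_compat, m_pos. }
      apply Rle_trans with (sum_f_R0 (fun i => (1 / 2) ^ S i * X) n).
      + apply sum_Rle. intros i Hi. apply inverse_recurrence_term; auto.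
        intros j' Hj'. apply IH. lia.
      + rewrite <- scal_sum. rewrite <- (Rmult_1_r X) at 2. apply Rmult_le_compat_l; [exact HX|].
        apply sum_half_pow_le_1.
    - assert (HM : 0 < s ^ S n * Mseq mu (S n))
        by (apply Rmult_lt_0_compat; [apply pow_lt; lra|apply Mseq_pos, mu_pos]).
      unfold X. rewrite <- Rmult_assoc, (Rmult_assoc B).
      apply Rmult_le_compat_r; [lra|].
      apply inverse_gain_le; auto. split; [apply Rlt_le, mseq_gain_pos, mu_pos|apply Hgain; lia]. }
  intros j. apply (Main j j (le_n j)).
Qed.

End InverseRecurrence.

Section BeurlingInverse.
Variable mu : nat -> R.
Hypothesis mu_pos : forall k, 0 < mu k.
Hypothesis lcm : log_convex (mseq mu).
Hypothesis mlim : is_lim_seq (fun k => Rpower (mseq mu k) (/ INR k)) p_infty.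

Lemma beurling_inv_tower U d m :
  0 < m -> beurling_tower mu U d -> (forall x, -d < x < d -> m <= Rabs (U O x)) ->
  beurling_tower mu (inv_tower U) d.
Proof.
  intros Hm HU Hlow.
  assert (HU0 : forall x, -d < x < d -> U O x <> 0).
  { intros x Hx E. specialize (Hlow x Hx). rewrite E, Rabs_R0 in Hlow. lra. }
  split; [apply inv_tower_is_tower; [apply HU|exact HU0]|].
  intros r s Hr Hs.
  destruct (beurling_tower_bound mu mu_pos U d r (s / 2) HU Hr ltac:(lra)) as [c [Hc Hcb]].
  destruct (mseq_gain_small mu mu_pos lcm mlim (m / (2 * (c + 1))))
    as [K HK]; [apply Rdiv_lt_0_compat; lra|].
  set (b := inverse_crude_bound mu m c s K).
  set (Sg := sum_f_R0 (fun j => / (s ^ j * Mseq mu j)) K).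
  assert (Hpos : forall j, 0 < s ^ j * Mseq mu j)
    by (intros j; apply Rmult_lt_0_compat; [apply pow_lt, Hs|apply Mseq_pos, mu_pos]).
  assert (HSg : forall j, (j <= K)%nat -> / (s ^ j * Mseq mu j) <= Sg).
  { intros j Hj. apply (sum_f_R0_term_le (fun j => / (s ^ j * Mseq mu j))); [|exact Hj].
    intros i. apply Rlt_le, Rinv_0_lt_compat, Hpos. }
  exists (b * Sg + 2 * c / (m * m)). intros k x Hx.
  assert (Hxd : -d < x < d) by (apply Rabs_le_between in Hx; generalize (Rabs_pos x); lra).
  assert (Hub : forall j, 0 <= Rabs (U j x) <= c * (s / 2) ^ j * Mseq mu j)
    by (intros j; split; [apply Rabs_pos|apply Hcb, Hx]).
  assert (Hw0 : Rabs (inv_tower U O x) <= / m).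
  { unfold inv_tower. simpl. rewrite Rabs_inv. apply Rinv_le_contravar; auto. }
  assert (Hrec := fun j => inv_tower_abs_recurrence U d (proj1 HU) HU0 m j x Hm Hxd (Hlow x Hxd)).
  destruct (inverse_crude_bound_spec mu m c s Hm _ _ Hub (fun j => Rabs_pos _) Hw0 Hrec K)
    as [Hb HbK].
  apply (inverse_recurrence_bound mu mu_pos lcm m c s Hm Hc Hs _ _
           Hub (fun j => Rabs_pos _) Hw0 Hrec K).
  - exact HK.
  - assert (0 <= Sg) by (apply Rle_trans with (/ (s ^ 0 * Mseq mu 0));
      [apply Rlt_le, Rinv_0_lt_compat, Hpos|apply HSg; lia]).
    assert (0 <= b * Sg) by (apply Rmult_le_pos; assumption). lra.
  - intros j Hj. apply Rle_trans with (b * Sg * (s ^ j * Mseq mu j)).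
    + apply Rle_trans with (b * (/ (s ^ j * Mseq mu j)) * (s ^ j * Mseq mu j)).
      * rewrite Rmult_assoc, Rinv_l, Rmult_1_r by (apply Rgt_not_eq, Hpos). apply HbK, Hj.
      * apply Rmult_le_compat_r; [apply Rlt_le, Hpos|].
        apply Rmult_le_compat_l; [exact Hb|apply HSg, Hj].
    + rewrite (Rmult_assoc (_ + _)). apply Rmult_le_compat_r; [apply Rlt_le, Hpos|].
      assert (0 <= 2 * c / (m * m)).
      { apply Rmult_le_pos; [lra|apply Rlt_le, Rinv_0_lt_compat; nra]. }
      lra.
Qed.

End BeurlingInverse.

(** * Complex germs *)

Definition beurling_on (mu : nat -> R) (d : R) (phi : R -> C) : Prop :=
  exists F1 F2, beurling_tower mu F1 d /\ beurling_tower mu F2 d /\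
    forall x, -d < x < d -> phi x = (F1 O x, F2 O x).

Lemma adherent_lub (V : R -> Prop) s : is_lub V s -> adherent V s.
Proof.
  intros [Hub Hleast] eps Heps. apply NNPP. intros Hn.
  assert (is_upper_bound V (s - eps)).
  { intros y Hy. apply Rnot_lt_le. intros Hlt. apply Hn. exists y. split; [exact Hy|].
    specialize (Hub y Hy). apply Rabs_def1; lra. }
  specialize (Hleast _ H). lra.
Qed.

Lemma rel_compact_in_interval_radius V d :
  rel_compact_in V (fun x => -d < x < d) -> exists r, r < d /\ forall x, V x -> Rabs x <= r.
Proof.
  intros [[B HB] Had].
  destruct (classic (exists x, V x)) as [Hne|Hempty].
  2:{ exists (d - 1). split; [lra|]. intros x Hx. exfalso. apply Hempty. exists x; exact Hx. }
  set (W := fun y => V (- y)).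
  assert (HW : exists y, W y).
  { destruct Hne as [x Hx]. exists (- x). unfold W. rewrite Ropp_involutive. exact Hx. }
  destruct (completeness V) as [s Hs].
  { exists B. intros x Hx. specialize (HB x Hx). apply Rabs_le_between in HB. lra. }
  { exact Hne. }
  destruct (completeness W) as [t Ht].
  { exists B. intros y Hy. specialize (HB _ Hy). apply Rabs_le_between in HB. lra. }
  { exact HW. }
  assert (Hs' := Had s (adherent_lub V s Hs)).
  assert (Ht' : - d < - t < d).
  { apply Had. intros eps Heps. destruct (adherent_lub W t Ht eps Heps) as [y [Hy Hyt]].
    exists (- y). split; [exact Hy|].
    rewrite <- Rabs_Ropp. replace (- (- t - - y)) with (t - y) by ring. exact Hyt. }
  exists (Rmax s t). split; [apply Rmax_lub_lt; lra|].
  intros x Hx. apply Rabs_le. split.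
  - assert (W (- x)) by (unfold W; rewrite Ropp_involutive; exact Hx).
    assert (- x <= t) by (apply (proj1 Ht), H). generalize (Rmax_r s t). lra.
  - assert (x <= s) by (apply (proj1 Hs), Hx). generalize (Rmax_l s t). lra.
Qed.

Lemma adherent_interval_abs_le a x : adherent (fun y => -a < y < a) x -> Rabs x <= a.
Proof.
  intros Had. apply Rnot_lt_le. intros Hl.
  destruct (Had (Rabs x - a) ltac:(lra)) as [y [Hy Hxy]].
  assert (Rabs y < a) by (apply Rabs_def1; lra).
  assert (Rabs x - Rabs y <= Rabs (x - y)) by apply Rabs_triang_inv. lra.
Qed.

Lemma Cmod_le_Rabs_sum (z : C) : Cmod z <= Rabs (fst z) + Rabs (snd z).
Proof.
  destruct z as [a b]. simpl.
  replace (a, b) with (RtoC a + RtoC b * Ci)%C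
    by (apply injective_projections; simpl; ring).
  eapply Rle_trans; [apply Cmod_triangle|].
  rewrite Cmod_mult, Cmod_Ci, !Cmod_R. lra.
Qed.

Section Germs.
Variable mu : nat -> R.
Hypothesis mu_pos : forall k, 0 < mu k.

Lemma E_Beurling_interval_bound eps phi r s :
  0 < eps -> E_Beurling mu (fun x => -eps < x < eps) phi -> r < eps -> 0 < s ->
  exists c, forall k x, Rabs x <= r -> Cmod (Cderive_n phi k x) <= c * s ^ k * Mseq mu k.
Proof.
  intros Heps [_ HB] Hr Hs.
  set (r' := (Rmax r 0 + eps) / 2).
  assert (Hmax : Rmax r 0 < eps) by (apply Rmax_lub_lt; lra).
  assert (Hr1 : r < r' < eps).
  { unfold r'. generalize (Rmax_l r 0). lra. }
  destruct (HB (fun x => -r' < x < r')) with (sigma := s) as [c Hc]; [| |exact Hs|].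
  - apply (open_and (fun y => -r' < y) (fun y => y < r')); [apply open_gt|apply open_lt].
  - split.
    + exists r'. intros x Hx. apply Rabs_le. lra.
    + intros x Hx. apply adherent_interval_abs_le, Rabs_le_between in Hx. simpl. lra.
  - exists c. intros k x Hx.
    assert (Hv : -r' < x < r') by (apply Rabs_le_between in Hx; lra).
    specialize (Hc x k Hv).
    assert (P : 0 < s ^ k * Mseq mu k)
      by (apply Rmult_lt_0_compat; [apply pow_lt, Hs|apply Mseq_pos, mu_pos]).
    apply (Rmult_le_compat_r (s ^ k * Mseq mu k)) in Hc; [|lra].
    unfold Rdiv in Hc. rewrite Rmult_assoc, Rinv_l in Hc by lra. lra.
Qed.

Lemma beurling_on_of_germ_in_E phi : germ_in_E mu phi -> exists d, 0 < d /\ beurling_on mu d phi.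
Proof.
  intros [eps [Heps [Hsm HE]]]. exists eps. split; [exact Heps|].
  exists (Derive_n (fun t => Re (phi t))), (Derive_n (fun t => Im (phi t))).
  split; [|split].
  - split; [apply Derive_n_tower; intros k x Hx; apply (Hsm k x Hx)|].
    intros r s Hr Hs. destruct (E_Beurling_interval_bound eps phi r s Heps (conj Hsm HE) Hr Hs)
      as [c Hc].
    exists c. intros k x Hx. eapply Rle_trans; [|apply (Hc k x Hx)].
    apply (re_le_Cmod (Cderive_n phi k x)).
  - split; [apply Derive_n_tower; intros k x Hx; apply (Hsm k x Hx)|].
    intros r s Hr Hs. destruct (E_Beurling_interval_bound eps phi r s Heps (conj Hsm HE) Hr Hs)
      as [c Hc].
    exists c. intros k x Hx. eapply Rle_trans; [|apply (Hc k x Hx)].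
    eapply Rle_trans; [apply Rmax_r|apply (Rmax_Cmod (Cderive_n phi k x))].
  - intros x _. simpl. destruct (phi x); reflexivity.
Qed.

Lemma germ_in_E_of_beurling_on d phi : 0 < d -> beurling_on mu d phi -> germ_in_E mu phi.
Proof.
  intros Hd [F1 [F2 [H1 [H2 He]]]]. exists d. split; [exact Hd|].
  assert (D1 := tower_Derive_n F1 d (fun t => Re (phi t)) (proj1 H1)
                  (fun x Hx => f_equal fst (He x Hx))).
  assert (D2 := tower_Derive_n F2 d (fun t => Im (phi t)) (proj1 H2)
                  (fun x Hx => f_equal snd (He x Hx))).
  split.
  - intros k x Hx. split; [apply D1|apply D2]; exact Hx.
  - intros V HV Hrc s Hs.
    destruct (rel_compact_in_interval_radius V d Hrc) as [r [Hr HVr]].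
    destruct (beurling_tower_bound mu mu_pos F1 d r s H1 Hr Hs) as [c1 [_ B1]].
    destruct (beurling_tower_bound mu mu_pos F2 d r s H2 Hr Hs) as [c2 [_ B2]].
    exists (c1 + c2). intros x k Hx.
    assert (Hxr := HVr x Hx).
    assert (Hxd : -d < x < d) by (apply Rabs_le_between in Hxr; lra).
    assert (P : 0 < s ^ k * Mseq mu k)
      by (apply Rmult_lt_0_compat; [apply pow_lt, Hs|apply Mseq_pos, mu_pos]).
    apply (Rmult_le_reg_r (s ^ k * Mseq mu k)); [exact P|].
    unfold Rdiv. rewrite Rmult_assoc, Rinv_l, Rmult_1_r by lra.
    eapply Rle_trans; [apply Cmod_le_Rabs_sum|]. unfold Cderive_n. simpl.
    rewrite (proj2 (D1 k x Hxd)), (proj2 (D2 k x Hxd)).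
    specialize (B1 k x Hxr). specialize (B2 k x Hxr). lra.
Qed.

End Germs.

Section BeurlingOn.
Variable mu : nat -> R.
Hypothesis mu_pos : forall k, 0 < mu k.
Hypothesis mu_incr : forall k, mu k <= mu (S k).
Hypothesis lcm : log_convex (mseq mu).
Hypothesis mlim : is_lim_seq (fun k => Rpower (mseq mu k) (/ INR k)) p_infty.

Lemma beurling_on_ext d phi psi :
  beurling_on mu d phi -> (forall x, -d < x < d -> phi x = psi x) -> beurling_on mu d psi.
Proof.
  intros [F1 [F2 [H1 [H2 He]]]] E. exists F1, F2. do 2 (split; [assumption|]).
  intros x Hx. rewrite <- E; auto.
Qed.

Lemma beurling_on_restrict d d' phi : d' <= d -> beurling_on mu d phi -> beurling_on mu d' phi.
Proof.
  intros Hd [F1 [F2 [H1 [H2 He]]]]. exists F1, F2.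
  split; [apply (beurling_tower_restrict mu F1 d); auto|].
  split; [apply (beurling_tower_restrict mu F2 d); auto|].
  intros x Hx. apply He. lra.
Qed.

Lemma beurling_on_const d (c : C) : beurling_on mu d (fun _ => c).
Proof.
  exists (const_tower (fst c)), (const_tower (snd c)).
  split; [apply beurling_const_tower, mu_pos|]. split; [apply beurling_const_tower, mu_pos|].
  intros x _. destruct c; reflexivity.
Qed.

Lemma beurling_on_mult d phi psi :
  beurling_on mu d phi -> beurling_on mu d psi -> beurling_on mu d (fun x => (phi x * psi x)%C).
Proof.
  intros [F1 [F2 [H1 [H2 He]]]] [G1 [G2 [K1 [K2 Ke]]]].
  exists (plus_tower (mul_tower F1 G1) (opp_tower (mul_tower F2 G2))),
    (plus_tower (mul_tower F1 G2) (mul_tower F2 G1)).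
  split; [|split].
  - apply (beurling_plus_tower mu mu_pos).
    + apply (beurling_mul_tower mu mu_pos mu_incr); assumption.
    + apply beurling_opp_tower, (beurling_mul_tower mu mu_pos mu_incr); assumption.
  - apply (beurling_plus_tower mu mu_pos); apply (beurling_mul_tower mu mu_pos mu_incr); assumption.
  - intros x Hx. rewrite He, Ke by exact Hx.
    unfold plus_tower, opp_tower. rewrite !mul_tower_0.
    apply injective_projections; simpl; ring.
Qed.

Lemma beurling_on_Cpow d phi n : beurling_on mu d phi -> beurling_on mu d (fun x => Cpow (phi x) n).
Proof.
  intros H. induction n as [|n IH]; simpl; [apply beurling_on_const|apply beurling_on_mult; auto].
Qed.

Lemma beurling_on_inv d phi m :
  0 < m -> beurling_on mu d phi -> (forall x, -d < x < d -> m <= Cmod (phi x)) ->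
  beurling_on mu d (fun x => Cinv (phi x)).
Proof.
  intros Hm [U1 [U2 [H1 [H2 He]]]] Hlow.
  set (N := plus_tower (mul_tower U1 U1) (mul_tower U2 U2)).
  assert (HN0 : forall x, -d < x < d -> N O x = Cmod (phi x) ^ 2).
  { intros x Hx. unfold N, plus_tower. rewrite !mul_tower_0, He by exact Hx.
    unfold Cmod. rewrite pow2_sqrt; [simpl; ring|].
    apply Rplus_le_le_0_compat; apply pow2_ge_0. }
  assert (HW : beurling_tower mu (inv_tower N) d).
  { apply (beurling_inv_tower mu mu_pos lcm mlim N d (m ^ 2)); [apply pow_lt, Hm| |].
    - apply (beurling_plus_tower mu mu_pos);
        apply (beurling_mul_tower mu mu_pos mu_incr); assumption.
    - intros x Hx. rewrite HN0, Rabs_right by (exact Hx || apply Rle_ge, pow2_ge_0).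
      apply pow_incr. split; [lra|apply Hlow, Hx]. }
  exists (mul_tower U1 (inv_tower N)), (opp_tower (mul_tower U2 (inv_tower N))).
  split; [apply (beurling_mul_tower mu mu_pos mu_incr); assumption|].
  split; [apply beurling_opp_tower, (beurling_mul_tower mu mu_pos mu_incr); assumption|].
  intros x Hx. unfold opp_tower. rewrite !mul_tower_0. unfold inv_tower. simpl Derive_n.
  assert (E : N O x = fst (phi x) ^ 2 + snd (phi x) ^ 2).
  { unfold N, plus_tower. rewrite !mul_tower_0, He by exact Hx. simpl. ring. }
  rewrite E, He by exact Hx. unfold Cinv. simpl.
  apply injective_projections; simpl; unfold Rdiv; ring.
Qed.

Lemma beurling_on_punctured_eq d phi psi :
  0 < d -> beurling_on mu d phi -> beurling_on mu d psi ->
  (forall x, 0 < Rabs x < d -> phi x = psi x) -> phi 0 = psi 0.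
Proof.
  intros Hd [F1 [F2 [H1 [H2 He]]]] [G1 [G2 [K1 [K2 Ke]]]] E.
  assert (Hcont : forall F : nat -> R -> R, beurling_tower mu F d -> continuity_pt (F O) 0).
  { intros F HF. apply (is_derive_continuity_pt _ _ _ (proj1 HF O 0 ltac:(lra))). }
  assert (Hin : forall x, 0 < Rabs (x - 0) < d -> -d < x < d /\ 0 < Rabs x < d).
  { intros x Hx. rewrite Rminus_0_r in Hx. split; [|exact Hx].
    destruct Hx as [_ Hx]. apply Rabs_def2 in Hx. lra. }
  assert (Hpair : forall x, 0 < Rabs (x - 0) < d ->
            ((F1 O x, F2 O x) : C) = (G1 O x, G2 O x)).
  { intros x Hx. destruct (Hin x Hx) as [Hxd Hx']. rewrite <- He, <- Ke by exact Hxd. auto. }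
  rewrite He, Ke by lra. f_equal.
  - apply (continuity_pt_punctured_eq _ _ 0 d Hd (Hcont F1 H1) (Hcont G1 K1)).
    intros x Hx. exact (f_equal fst (Hpair x Hx)).
  - apply (continuity_pt_punctured_eq _ _ 0 d Hd (Hcont F2 H2) (Hcont G2 K2)).
    intros x Hx. exact (f_equal snd (Hpair x Hx)).
Qed.

Lemma beurling_on_bounded d phi r :
  beurling_on mu d phi -> r < d -> exists K, 0 <= K /\ forall x, Rabs x <= r -> Cmod (phi x) <= K.
Proof.
  intros [F1 [F2 [H1 [H2 He]]]] Hr.
  destruct (beurling_tower_bound mu mu_pos F1 d r 1 H1 Hr ltac:(lra)) as [c1 [Hc1 B1]].
  destruct (beurling_tower_bound mu mu_pos F2 d r 1 H2 Hr ltac:(lra)) as [c2 [Hc2 B2]].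
  exists (c1 + c2). split; [lra|]. intros x Hx.
  assert (Hxd : -d < x < d) by (apply Rabs_le_between in Hx; lra).
  rewrite He by exact Hxd. eapply Rle_trans; [apply Cmod_le_Rabs_sum|].
  specialize (B1 O x Hx). specialize (B2 O x Hx). simpl in *. lra.
Qed.

Lemma beurling_on_nonvanishing_near_0 d U :
  0 < d -> beurling_on mu d U -> U 0 <> 0%C ->
  exists d' m, 0 < d' <= d /\ 0 < m /\ forall x, -d' < x < d' -> m <= Cmod (U x).
Proof.
  intros Hd [U1 [U2 [H1 [H2 He]]]] HU0.
  set (N := fun x => U1 O x ^ 2 + U2 O x ^ 2).
  assert (HN : forall x, -d < x < d -> Cmod (U x) = sqrt (N x)).
  { intros x Hx. rewrite He by exact Hx. reflexivity. }
  assert (HN0 : 0 < N 0).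
  { assert (Hm := proj1 (Cmod_gt_0 (U 0)) HU0). rewrite HN in Hm by lra.
    apply Rnot_le_lt. intros Hle. rewrite sqrt_neg_0 in Hm by exact Hle. lra. }
  assert (Hc : continuity_pt N 0).
  { apply (is_derive_continuity_pt _ _ (INR 2 * U1 1%nat 0 * U1 O 0 ^ pred 2
                                        + INR 2 * U2 1%nat 0 * U2 O 0 ^ pred 2)).
    apply (is_derive_plus (fun x => U1 O x ^ 2) (fun x => U2 O x ^ 2));
      apply is_derive_pow; [apply (proj1 H1)|apply (proj1 H2)]; lra. }
  destruct (proj1 (continuity_pt_locally N 0) Hc (mkposreal (N 0 / 2) ltac:(simpl; lra)))
    as [delta Hdelta].
  exists (Rmin d delta), (sqrt (N 0 / 2)).
  split; [split; [apply Rmin_pos; [lra|apply cond_pos]|apply Rmin_l]|].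
  split; [apply sqrt_lt_R0; lra|].
  intros x Hx. assert (Hxd : -d < x < d) by (generalize (Rmin_l d delta); lra).
  rewrite HN by exact Hxd. apply sqrt_le_1_alt.
  assert (Hb : Rabs (x - 0) < delta) by (rewrite Rminus_0_r; apply Rabs_def1;
    generalize (Rmin_r d delta); lra).
  specialize (Hdelta x Hb). simpl in Hdelta. apply Rabs_def2 in Hdelta. lra.
Qed.

Lemma beurling_on_zero_or_factor d phi :
  quasianalytic mu -> derivation_closed mu -> beurling_on mu d phi ->
  (forall x, -d < x < d -> phi x = 0%C) \/
  exists a U, beurling_on mu d U /\ U 0 <> 0%C /\
    forall x, -d < x < d -> phi x = (RtoC (x ^ a) * U x)%C.
Proof.
  intros qa dc [F1 [F2 [H1 [H2 He]]]].
  destruct (classic (forall k, F1 k 0 = 0 /\ F2 k 0 = 0)) as [Hflat|Hnf].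
  - left. intros x Hx. rewrite He by exact Hx.
    rewrite (flat_beurling_tower_vanishes mu mu_pos mu_incr F1 d qa H1
               (fun k => proj1 (Hflat k)) x Hx),
      (flat_beurling_tower_vanishes mu mu_pos mu_incr F2 d qa H2
         (fun k => proj2 (Hflat k)) x Hx).
    reflexivity.
  - right.
    destruct (dec_inh_nat_subset_has_unique_least_element
                (fun k => ~ (F1 k 0 = 0 /\ F2 k 0 = 0))) as [a [[Ha Hmin] _]].
    { intros n. apply classic. }
    { apply not_all_ex_not, Hnf. }
    assert (Hlow : forall i, (i < a)%nat -> F1 i 0 = 0 /\ F2 i 0 = 0).
    { intros i Hi. apply NNPP. intros Hn. specialize (Hmin i Hn). lia. }
    destruct (beurling_divide_xn mu mu_pos dc d a F1 H1 (fun i Hi => proj1 (Hlow i Hi)))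
      as [U1 [HU1 [HU1x HU10]]].
    destruct (beurling_divide_xn mu mu_pos dc d a F2 H2 (fun i Hi => proj2 (Hlow i Hi)))
      as [U2 [HU2 [HU2x HU20]]].
    exists a, (fun x => (U1 O x, U2 O x)). split; [exists U1, U2; auto|split].
    + intros E. apply Ha. split; [apply HU10, (f_equal fst E)|apply HU20, (f_equal snd E)].
    + intros x Hx. rewrite He, HU1x, HU2x by exact Hx.
      apply injective_projections; simpl; ring.
Qed.

Lemma beurling_on_divide_by_bound d psi a K :
  derivation_closed mu -> 0 < d -> beurling_on mu d psi ->
  (forall x, -d < x < d -> Cmod (psi x) <= K * Rabs x ^ a) ->
  exists V, beurling_on mu d V /\ forall x, -d < x < d -> psi x = (RtoC (x ^ a) * V x)%C.
Proof.
  intros dc Hd [F1 [F2 [H1 [H2 He]]]] Hb.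
  destruct (beurling_divide_by_bound mu mu_pos dc d a F1 K Hd H1) as [V1 [HV1 HV1x]].
  { intros x Hx. eapply Rle_trans; [|apply Hb, Hx]. rewrite He by exact Hx.
    apply (re_le_Cmod (F1 O x, F2 O x)). }
  destruct (beurling_divide_by_bound mu mu_pos dc d a F2 K Hd H2) as [V2 [HV2 HV2x]].
  { intros x Hx. eapply Rle_trans; [|apply Hb, Hx]. rewrite He by exact Hx.
    eapply Rle_trans; [apply Rmax_r|apply (Rmax_Cmod (F1 O x, F2 O x))]. }
  exists (fun x => (V1 O x, V2 O x)). split; [exists V1, V2; auto|].
  intros x Hx. rewrite He, HV1x, HV2x by exact Hx.
  apply injective_projections; simpl; ring.
Qed.

End BeurlingOn.

(** * Roots *)

Lemma pow_lt_pow_l a b n : 0 <= a < b -> (0 < n)%nat -> a ^ n < b ^ n.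
Proof.
  intros Hab Hn. destruct n as [|n]; [lia|]. clear Hn.
  induction n as [|n IH]; [simpl; lra|].
  change (a * a ^ S n < b * b ^ S n).
  assert (0 <= a ^ S n) by (apply pow_le; lra). nra.
Qed.

Lemma Cpow_succ_bound (z : C) j K q :
  (1 <= j)%nat -> 0 <= q <= 1 -> 0 <= K ->
  Cmod (Cpow z j) <= K * q -> Cmod (Cpow z (S j)) <= (K + 1) ^ 2 * q.
Proof.
  intros Hj Hq HK Hz.
  (* |z^(j+1)|^j = |z^j|^(j+1) *)
  assert (Hpow : Cmod (Cpow z (S j)) ^ j <= ((K + 1) ^ 2 * q) ^ j).
  { rewrite <- Cmod_pow, <- Cpow_mult_r, Nat.mul_comm, Cpow_mult_r, Cmod_pow.
    apply Rle_trans with ((K * q) ^ S j); [apply pow_incr; split; [apply Cmod_ge_0|exact Hz]|].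
    rewrite !Rpow_mult_distr, <- pow_mult. apply Rmult_le_compat.
    - apply pow_le. exact HK.
    - apply pow_le. lra.
    - apply Rle_trans with ((K + 1) ^ S j); [apply pow_incr; lra|apply Rle_pow; [lra|lia]].
    - rewrite <- (Rmult_1_l (q ^ j)). simpl. apply Rmult_le_compat_r; [apply pow_le|]; lra. }
  apply Rnot_lt_le. intros Hlt.
  assert (0 <= (K + 1) ^ 2 * q) by (apply Rmult_le_pos; [apply pow_le|]; lra).
  assert (X := pow_lt_pow_l _ _ j (conj H Hlt) ltac:(lia)). lra.
Qed.

Lemma Cpow_eq_0 (z : C) n : Cpow z n = 0%C -> z = 0%C.
Proof. intros H. apply NNPP. intros Hz. exact (Cpow_nz z n Hz H). Qed.

Lemma Cpow_inj_succ (a b : C) j :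
  (1 <= j)%nat -> Cpow a j = Cpow b j -> Cpow a (S j) = Cpow b (S j) -> a = b.
Proof.
  intros Hj E1 E2. destruct (classic (b = 0%C)) as [->|Hb].
  - apply (Cpow_eq_0 a j). rewrite E1. destruct j as [|j]; [lia|].
    rewrite Cpow_S. apply Cmult_0_l.
  - assert (Hbj := Cpow_nz b j Hb). rewrite !Cpow_S, E1 in E2.
    replace a with ((a * Cpow b j) / Cpow b j)%C by (field; exact Hbj).
    rewrite E2. field. exact Hbj.
Qed.

Section Roots.
Variable mu : nat -> R.
Hypothesis mu_pos : forall k, 0 < mu k.
Hypothesis mu_incr : forall k, mu k <= mu (S k).
Hypothesis dc : derivation_closed mu.
Hypothesis lcm : log_convex (mseq mu).
Hypothesis mlim : is_lim_seq (fun k => Rpower (mseq mu k) (/ INR k)) p_infty.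

Lemma beurling_on_Cpow_succ_factor (f U : R -> C) j a d :
  (1 <= j)%nat -> 0 < d ->
  beurling_on mu d (fun x => Cpow (f x) (S j)) -> beurling_on mu d U ->
  (forall x, -d < x < d -> Cpow (f x) j = (RtoC (x ^ a) * U x)%C) ->
  exists d' V, 0 < d' <= d /\ beurling_on mu d' V /\
    forall x, -d' < x < d' -> Cpow (f x) (S j) = (RtoC (x ^ a) * V x)%C.
Proof.
  intros Hj Hd Hfj1 HU Hfac.
  destruct (beurling_on_bounded mu mu_pos d U (d / 2) HU ltac:(lra)) as [K [HK HKb]].
  set (d' := Rmin (d / 2) 1).
  assert (Hd' : 0 < d' <= d)
    by (unfold d'; split; [apply Rmin_pos|generalize (Rmin_l (d / 2) 1)]; lra).
  destruct (beurling_on_divide_by_bound mu mu_pos d' (fun x => Cpow (f x) (S j)) a ((K + 1) ^ 2))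
    as [V [HV HVx]]; [exact dc|lra|apply (beurling_on_restrict mu d); [lra|exact Hfj1]| |].
  - intros x Hx. assert (Hxr : Rabs x <= d / 2 /\ Rabs x <= 1).
    { unfold d' in Hx.
      split; apply Rabs_le; [generalize (Rmin_l (d / 2) 1)|generalize (Rmin_r (d / 2) 1)]; lra. }
    apply (Cpow_succ_bound (f x) j K); [exact Hj| |exact HK|].
    + split; [apply pow_le, Rabs_pos|rewrite <- (pow1 a); apply pow_incr].
      split; [apply Rabs_pos|apply Hxr].
    + rewrite Hfac by lra. rewrite Cmod_mult, Cmod_R, <- RPow_abs, Rmult_comm.
      apply Rmult_le_compat_r; [apply pow_le, Rabs_pos|apply HKb, Hxr].
  - exists d', V. split; [exact Hd'|split; [exact HV|exact HVx]].
Qed.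

Lemma beurling_on_root_of_factors (f U V : R -> C) j a d :
  (1 <= j)%nat -> 0 < d ->
  beurling_on mu d (fun x => Cpow (f x) j) -> beurling_on mu d (fun x => Cpow (f x) (S j)) ->
  beurling_on mu d U -> beurling_on mu d V -> U 0 <> 0%C ->
  (forall x, -d < x < d -> Cpow (f x) j = (RtoC (x ^ a) * U x)%C) ->
  (forall x, -d < x < d -> Cpow (f x) (S j) = (RtoC (x ^ a) * V x)%C) ->
  exists d', 0 < d' /\ beurling_on mu d' f.
Proof.
  intros Hj Hd Hfj Hfj1 HU HV HU0 Hfac Hfac1.
  destruct (beurling_on_nonvanishing_near_0 mu d U Hd HU HU0) as [d' [m [Hd' [Hm Hmx]]]].
  set (phi := fun x => (V x * Cinv (U x))%C).
  assert (Hphi : beurling_on mu d' phi).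
  { apply (beurling_on_mult mu mu_pos mu_incr).
    { apply (beurling_on_restrict mu d); [lra|exact HV]. }
    apply (beurling_on_inv mu mu_pos mu_incr lcm mlim d' U m Hm); [|exact Hmx].
    apply (beurling_on_restrict mu d); [lra|exact HU]. }
  assert (Hoff : forall x, 0 < Rabs x < d' -> f x = phi x).
  { intros x [Hx0 Hx]. apply Rabs_def2 in Hx.
    assert (Hxa : RtoC (x ^ a) <> 0%C).
    { intros E. apply (pow_nonzero x a); [|exact (f_equal fst E)].
      intros ->. rewrite Rabs_R0 in Hx0. lra. }
    assert (HUx : U x <> 0%C).
    { intros E. specialize (Hmx x ltac:(lra)). rewrite E, Cmod_0 in Hmx. lra. }
    assert (E : (f x * (RtoC (x ^ a) * U x))%C = (RtoC (x ^ a) * V x)%C).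
    { rewrite <- Hfac, <- Hfac1 by lra. symmetry. apply Cpow_S. }
    unfold phi.
    replace (f x) with ((f x * (RtoC (x ^ a) * U x)) / (RtoC (x ^ a) * U x))%C
      by (field; split; assumption).
    rewrite E. field. split; assumption. }
  assert (Hcpow : forall n, beurling_on mu d' (fun x => Cpow (f x) n) ->
                          Cpow (f 0) n = Cpow (phi 0) n).
  { intros n Hn.
    apply (beurling_on_punctured_eq mu d' (fun x => Cpow (f x) n) (fun x => Cpow (phi x) n));
      [lra|exact Hn|apply (beurling_on_Cpow mu mu_pos mu_incr), Hphi|].
    intros x Hx. rewrite Hoff by exact Hx. reflexivity. }
  assert (H0 : f 0 = phi 0).
  { apply (Cpow_inj_succ _ _ j Hj); apply Hcpow;
      (apply (beurling_on_restrict mu d); [lra|assumption]). }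
  exists d'. split; [lra|].
  apply (beurling_on_ext mu d' phi); [exact Hphi|].
  intros x Hx. destruct (Req_dec x 0) as [->|Hx0]; [symmetry; exact H0|].
  symmetry. apply Hoff. split; [apply Rabs_pos_lt, Hx0|apply Rabs_def1; lra].
Qed.

End Roots.

Theorem theorem2p6 (mu : nat -> R) :
  weight_sequence mu ->
  quasianalytic mu ->
  derivation_closed mu ->
  log_convex (mseq mu) ->
  is_lim_seq (fun k => Rpower (mseq mu k) (/ INR k)) p_infty ->
  property_D (germ_in_E mu).
Proof.
  intros [_ [mu_pos [mu_incr _]]] qa dc lcm mlim f j Hj Hfj Hfj1.
  destruct (beurling_on_of_germ_in_E mu mu_pos _ Hfj) as [d1 [Hd1 G]].
  destruct (beurling_on_of_germ_in_E mu mu_pos _ Hfj1) as [d2 [Hd2 H]].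
  set (d := Rmin d1 d2). assert (Hd : 0 < d) by (apply Rmin_pos; assumption).
  apply (beurling_on_restrict mu d1 d) in G; [|apply Rmin_l].
  apply (beurling_on_restrict mu d2 d) in H; [|apply Rmin_r].
  destruct (beurling_on_zero_or_factor mu mu_pos mu_incr d _ qa dc G)
    as [Hzero|[a [U [HU [HU0 Hfac]]]]].
  - apply (germ_in_E_of_beurling_on mu mu_pos d f Hd).
    apply (beurling_on_ext mu d (fun _ => 0%C)); [apply beurling_on_const, mu_pos|].
    intros x Hx. symmetry. apply (Cpow_eq_0 _ j), Hzero, Hx.
  - destruct (beurling_on_Cpow_succ_factor mu mu_pos dc f U j a d Hj Hd H HU Hfac)
      as [d' [V [Hd' [HV Hfac1]]]].
    assert (Hres : forall phi, beurling_on mu d phi -> beurling_on mu d' phi)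
      by (intros phi; apply beurling_on_restrict; lra).
    destruct (beurling_on_root_of_factors mu mu_pos mu_incr lcm mlim f U V j a d' Hj
                ltac:(lra) (Hres _ G) (Hres _ H) (Hres _ HU) HV HU0
                (fun x Hx => Hfac x ltac:(lra)) Hfac1) as [d'' [Hd'' Hf]].
    exact (germ_in_E_of_beurling_on mu mu_pos d'' f Hd'' Hf).
Qed.
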